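(* Let $B\subset\mathbb{R}^{n+1}$ be a symmetric convex body and let $x_i\to x$ be a convergent sequence in $S^n$. Assume each section $x_i^\perp\cap B$ is an affine symmetric body of revolution with an axis of revolution $L_i\subset x_i^\perp$, and that $L_i\to L$ in $\mathbb{R}P^n$. Then $x^\perp\cap B$ is an affine symmetric body of revolution with axis of revolution $L$.
   Context: A symmetric convex body is a compact convex set with nonempty interior invariant under $x\mapsto-x$. A symmetric convex body $K\subset\mathbb{R}^m$ is a symmetric body of revolution if it admits an axis of revolution: a 1-dimensional linear subspace $L$ such that every section of $K$ by an affine hyperplane $A$ orthogonal to $L$ is a closed Euclidean $(m-1)$-ball in $A$ centered at $A\cap L$ (possibly empty or a point). An affine symmetric body of revolution (in a linear subspace) is a convex body linearly equivalent to a symmetric body of revolution; the image of an axis under the linear equivalence is called an axis of revolution of it. $\mathbb{R}P^n$ is the space of 1-dimensional linear subspaces of $\mathbb{R}^{n+1}$ with its usual topology. *)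

(* real Euclidean geometry in R^d.
   A vector of R^d is represented as a function nat -> R whose coordinates
   of index >= d vanish (predicate [Vec d]). *)
From Stdlib Require Import Reals List.
Open Scope R_scope.

Definition vec := nat -> R.

Definition Vec (d : nat) (v : vec) : Prop := forall i, (d <= i)%nat -> v i = 0.

Fixpoint sumR (f : nat -> R) (d : nat) : R :=
  match d with O => 0 | S k => sumR f k + f k end.

Definition vadd (u v : vec) : vec := fun i => u i + v i.
Definition vsub (u v : vec) : vec := fun i => u i - v i.
Definition vopp (u : vec) : vec := fun i => - u i.
Definition scal (t : R) (u : vec) : vec := fun i => t * u i.
Definition vzero : vec := fun _ => 0.

Definition dot (d : nat) (u v : vec) : R := sumR (fun i => u i * v i) d.
Definition norm (d : nat) (v : vec) : R := sqrt (dot d v v).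
Definition dist (d : nat) (u v : vec) : R := norm d (vsub u v).

Definition open_set (d : nat) (U : vec -> Prop) : Prop :=
  forall v, Vec d v -> U v ->
    exists eps, 0 < eps /\ forall w, Vec d w -> dist d w v < eps -> U w.

Definition compact (d : nat) (K : vec -> Prop) : Prop :=
  forall (I : Type) (U : I -> vec -> Prop),
    (forall i, open_set d (U i)) ->
    (forall v, K v -> exists i, U i v) ->
    exists l : list I, forall v, K v -> exists i, In i l /\ U i v.

Definition convex (K : vec -> Prop) : Prop :=
  forall u v t, K u -> K v -> 0 <= t <= 1 ->
    K (vadd (scal t u) (scal (1 - t) v)).

Definition nonempty_interior (d : nat) (K : vec -> Prop) : Prop :=
  exists v eps, Vec d v /\ 0 < eps /\
    forall w, Vec d w -> dist d w v < eps -> K w.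

Definition symmetric (K : vec -> Prop) : Prop := forall v, K v -> K (vopp v).

Definition SymConvexBody (d : nat) (K : vec -> Prop) : Prop :=
  (forall v, K v -> Vec d v) /\ compact d K /\ convex K /\
  nonempty_interior d K /\ symmetric K.

Definition span1 (u : vec) : vec -> Prop := fun v => exists t, v = scal t u.

Definition IsLine (d : nat) (L : vec -> Prop) : Prop :=
  exists u, Vec d u /\ u <> vzero /\ forall v, L v <-> span1 u v.

(* K ⊂ R^m is a symmetric body of revolution with axis of revolution L:
   every affine hyperplane A = {w | <w,u> = t} orthogonal to L (u ∈ L \ {0})
   meets K in the empty set or in a closed Euclidean ball of A centered at
   the point c = A ∩ L (radius 0 allowed, i.e. a point). *)
Definition SymBodyRevolution (m : nat) (K L : vec -> Prop) : Prop :=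
  SymConvexBody m K /\ IsLine m L /\
  forall u t, L u -> u <> vzero ->
    (forall w, ~ (K w /\ dot m w u = t)) \/
    exists c r, L c /\ dot m c u = t /\ 0 <= r /\
      forall w, Vec m w ->
        ((K w /\ dot m w u = t) <-> (dot m w u = t /\ dist m w c <= r)).

Definition LinIsoOnto (m d : nat) (T : vec -> vec) (V : vec -> Prop) : Prop :=
  (forall v, Vec m v -> Vec d (T v)) /\
  (forall a b u v, Vec m u -> Vec m v ->
     T (vadd (scal a u) (scal b v)) = vadd (scal a (T u)) (scal b (T v))) /\
  (forall u v, Vec m u -> Vec m v -> T u = T v -> u = v) /\
  (forall w, V w <-> exists v, Vec m v /\ w = T v).

Definition AffSymBodyRevolution (d : nat) (V K L : vec -> Prop) : Prop :=
  exists (m : nat) (T : vec -> vec) (K' L' : vec -> Prop),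
    LinIsoOnto m d T V /\ SymBodyRevolution m K' L' /\
    (forall w, K w <-> exists v, K' v /\ w = T v) /\
    (forall w, L w <-> exists v, L' v /\ w = T v).

Definition OnSphere (d : nat) (x : vec) : Prop := Vec d x /\ norm d x = 1.

Definition ConvergesTo (d : nat) (xs : nat -> vec) (x : vec) : Prop :=
  forall eps, 0 < eps -> exists N, forall i, (N <= i)%nat -> dist d (xs i) x < eps.

(* convergence in RP^{d-1} (quotient topology of S^{d-1}, a 2-sheeted
   covering): L_i -> L iff there are unit representatives converging *)
Definition RPConverges (d : nat) (Ls : nat -> vec -> Prop) (L : vec -> Prop) : Prop :=
  exists (us : nat -> vec) (u : vec),
    (forall i, OnSphere d (us i) /\ forall v, Ls i v <-> span1 (us i) v) /\
    OnSphere d u /\ (forall v, L v <-> span1 u v) /\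
    ConvergesTo d us u.

Definition perp (d : nat) (x : vec) : vec -> Prop := fun w => Vec d w /\ dot d w x = 0.
Definition section (d : nat) (B : vec -> Prop) (x : vec) : vec -> Prop :=
  fun w => B w /\ dot d w x = 0.

(* Each section [x_i^⊥ ∩ B] is parametrised by a linear map [R^m -> x_i^⊥] sending a unit vector
   [a_i] to the unit axis vector [u_i], under which [B] becomes invariant under the rotations of [R^m]
   fixing [a_i]. Normalising the axis and the equatorial disc bounds the distortion of these maps above
   and below by constants depending only on the inradius and circumradius of [B]. By compactness a
   subsequence of the maps and of the [a_i] converges; the limit map parametrises [x^⊥], sends the
   limit [a] to [u], and [B] is still invariant under rotations fixing [a] because [B] is closed. The
   level sets of a closed convex body invariant under the rotations fixing [a] are balls centred on
   [span a], so the pulled-back section is a body of revolution with axis [span a]. *)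

From Pilot Require Import Defs.
From Stdlib Require Import Reals Lra Lia Arith List Classical FunctionalExtensionality IndefiniteDescription.
(* Imported again so that [compact] denotes [Defs.compact] rather than [Rtopology.compact]. *)
Import Defs.
Open Scope R_scope.

(** * Euclidean vectors *)

Lemma sumR_ext f g d : (forall i, (i < d)%nat -> f i = g i) -> sumR f d = sumR g d.
Proof. induction d; simpl; intros H; auto. rewrite IHd by (intros; apply H; lia). rewrite H by lia. auto. Qed.

Lemma sumR_plus f g d : sumR (fun i => f i + g i) d = sumR f d + sumR g d.
Proof. induction d; simpl; [lra|rewrite IHd; lra]. Qed.

Lemma sumR_mult c f d : sumR (fun i => c * f i) d = c * sumR f d.
Proof. induction d; simpl; [lra|rewrite IHd; lra]. Qed.

Lemma sumR_opp f d : sumR (fun i => - f i) d = - sumR f d.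
Proof. induction d; simpl; [lra|rewrite IHd; lra]. Qed.

Lemma sumR_minus f g d : sumR (fun i => f i - g i) d = sumR f d - sumR g d.
Proof. induction d; simpl; [lra|rewrite IHd; lra]. Qed.

Lemma sumR_zero d : sumR (fun _ => 0) d = 0.
Proof. induction d; simpl; [lra|rewrite IHd; lra]. Qed.

Lemma sumR_nonneg f d : (forall i, (i < d)%nat -> 0 <= f i) -> 0 <= sumR f d.
Proof. induction d; simpl; intros H; [lra|]. assert (0 <= f d) by (apply H; lia).
  assert (0 <= sumR f d) by (apply IHd; intros; apply H; lia). lra. Qed.

Lemma sumR_le f g d : (forall i, (i < d)%nat -> f i <= g i) -> sumR f d <= sumR g d.
Proof. induction d; simpl; intros H; [lra|]. assert (f d <= g d) by (apply H; lia).
  assert (sumR f d <= sumR g d) by (apply IHd; intros; apply H; lia). lra. Qed.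

Lemma sumR_term_le f d j : (forall i, (i < d)%nat -> 0 <= f i) -> (j < d)%nat -> f j <= sumR f d.
Proof. induction d; intros H Hj; simpl. lia.
  destruct (Nat.eq_dec j d). subst. assert (0 <= sumR f d) by (apply sumR_nonneg; intros; apply H; lia). lra.
  assert (f j <= sumR f d) by (apply IHd; [intros; apply H; lia| lia]). assert (0 <= f d) by (apply H; lia). lra. Qed.

Lemma sumR_nonneg_zero f d : (forall i, (i < d)%nat -> 0 <= f i) -> sumR f d = 0 ->
  forall i, (i < d)%nat -> f i = 0.
Proof. intros H Hs i Hi. assert (f i <= sumR f d) by (apply sumR_term_le; auto).
  assert (0 <= f i) by auto. lra. Qed.

Lemma sumR_single a j d : (j < d)%nat -> sumR (fun i => if Nat.eqb i j then a else 0) d = a.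
Proof. induction d; intros Hj; simpl. lia.
  destruct (Nat.eq_dec j d). subst. rewrite Nat.eqb_refl.
  rewrite (sumR_ext _ (fun _ => 0)). rewrite sumR_zero; lra. intros i Hi. destruct (Nat.eqb_spec i d); [lia|auto].
  destruct (Nat.eqb_spec d j). lia. rewrite IHd by lia. lra. Qed.

Lemma sumR_update f g d j : (j < d)%nat -> (forall i, (i < d)%nat -> i <> j -> g i = f i) ->
  sumR g d = sumR f d - f j + g j.
Proof. induction d; intros Hj H; simpl. lia.
  destruct (Nat.eq_dec j d). subst. rewrite (sumR_ext g f d). lra. intros; apply H; lia.
  rewrite IHd; [|lia|intros; apply H; lia]. rewrite (H d) by lia. lra. Qed.

Lemma vec_ext (u v : vec) : (forall i, u i = v i) -> u = v.
Proof. intros; apply functional_extensionality; auto. Qed.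

Ltac vext := apply vec_ext; intro; unfold vadd, vsub, vopp, scal, vzero.

Lemma Vec_add d u v : Vec d u -> Vec d v -> Vec d (vadd u v).
Proof. unfold Vec, vadd; intros Hu Hv i Hi; rewrite Hu, Hv; auto; lra. Qed.

Lemma Vec_sub d u v : Vec d u -> Vec d v -> Vec d (vsub u v).
Proof. unfold Vec, vsub; intros Hu Hv i Hi; rewrite Hu, Hv; auto; lra. Qed.

Lemma Vec_scal d t u : Vec d u -> Vec d (scal t u).
Proof. unfold Vec, scal; intros Hu i Hi; rewrite Hu; auto; lra. Qed.

Lemma Vec_opp d u : Vec d u -> Vec d (vopp u).
Proof. unfold Vec, vopp; intros Hu i Hi; rewrite Hu; auto; lra. Qed.

Lemma Vec_zero d : Vec d vzero.
Proof. unfold Vec, vzero; auto. Qed.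

#[export] Hint Resolve Vec_add Vec_sub Vec_scal Vec_opp Vec_zero : vec.

Lemma dot_comm d u v : dot d u v = dot d v u.
Proof. unfold dot. apply sumR_ext; intros; ring. Qed.

Lemma dot_add_l d u v w : dot d (vadd u v) w = dot d u w + dot d v w.
Proof. unfold dot, vadd. rewrite <- sumR_plus. apply sumR_ext; intros; ring. Qed.

Lemma dot_add_r d u v w : dot d w (vadd u v) = dot d w u + dot d w v.
Proof. rewrite dot_comm, dot_add_l, !(dot_comm d w); auto. Qed.

Lemma dot_scal_l d t u w : dot d (scal t u) w = t * dot d u w.
Proof. unfold dot, scal. rewrite <- sumR_mult. apply sumR_ext; intros; ring. Qed.

Lemma dot_scal_r d t u w : dot d w (scal t u) = t * dot d w u.
Proof. rewrite dot_comm, dot_scal_l, (dot_comm d w); auto. Qed.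

Lemma dot_sub_l d u v w : dot d (vsub u v) w = dot d u w - dot d v w.
Proof. unfold dot, vsub. rewrite <- sumR_minus. apply sumR_ext; intros; ring. Qed.

Lemma dot_sub_r d u v w : dot d w (vsub u v) = dot d w u - dot d w v.
Proof. rewrite dot_comm, dot_sub_l, !(dot_comm d w); auto. Qed.

Lemma dot_opp_l d u w : dot d (vopp u) w = - dot d u w.
Proof. unfold dot, vopp. rewrite <- sumR_opp. apply sumR_ext; intros; ring. Qed.

Lemma dot_opp_r d u w : dot d w (vopp u) = - dot d w u.
Proof. rewrite dot_comm, dot_opp_l, (dot_comm d w); auto. Qed.

Lemma dot_zero_l d w : dot d vzero w = 0.
Proof. unfold dot, vzero. transitivity (sumR (fun _ => 0) d). apply sumR_ext; intros; ring. apply sumR_zero. Qed.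

Lemma dot_zero_r d w : dot d w vzero = 0.
Proof. rewrite dot_comm; apply dot_zero_l. Qed.

Lemma dot_self_nonneg d u : 0 <= dot d u u.
Proof. unfold dot. apply sumR_nonneg; intros; nra. Qed.

Lemma dot_self_zero d u : Vec d u -> dot d u u = 0 -> u = vzero.
Proof. intros Hu H. apply vec_ext; intro x; unfold vzero. destruct (le_lt_dec d x) as [h|h]. apply Hu; auto.
  assert (u x * u x = 0). apply (sumR_nonneg_zero (fun i => u i * u i) d); auto. intros; nra. nra. Qed.

Hint Rewrite dot_add_l dot_add_r dot_scal_l dot_scal_r dot_sub_l dot_sub_r dot_opp_l dot_opp_r
  dot_zero_l dot_zero_r : dotE.

Lemma norm_nonneg d u : 0 <= norm d u.
Proof. unfold norm; apply sqrt_pos. Qed.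

Lemma norm_sq d u : norm d u * norm d u = dot d u u.
Proof. unfold norm. apply sqrt_sqrt, dot_self_nonneg. Qed.

Lemma norm_of_sq d u a : 0 <= a -> dot d u u = a * a -> norm d u = a.
Proof. intros Ha H. unfold norm. rewrite H. apply sqrt_square; auto. Qed.

Lemma norm_le_sq d u a : 0 <= a -> dot d u u <= a * a -> norm d u <= a.
Proof. intros Ha H. pose proof (norm_sq d u). pose proof (norm_nonneg d u). nra. Qed.

Lemma cauchy_schwarz d u v : Rabs (dot d u v) <= norm d u * norm d v.
Proof.
  pose proof (norm_sq d u) as Hu. pose proof (norm_sq d v) as Hv.
  pose proof (norm_nonneg d u) as Nu. pose proof (norm_nonneg d v) as Nv.
  assert (Hq : forall t, 0 <= dot d u u - 2 * t * dot d u v + t * t * dot d v v).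
  { intro t. pose proof (dot_self_nonneg d (vsub u (scal t v))) as Hs.
    autorewrite with dotE in Hs. rewrite (dot_comm d v u) in Hs. nra. }
  destruct (Req_dec (dot d v v) 0) as [H0|H0].
  - assert (H1 : dot d u v = 0).
    { destruct (Req_dec (dot d u v) 0); auto. exfalso.
      specialize (Hq ((dot d u u + 1) / (2 * dot d u v))). rewrite H0 in Hq.
      replace (2 * ((dot d u u + 1) / (2 * dot d u v)) * dot d u v) with (dot d u u + 1) in Hq by (field; auto). lra. }
    rewrite H1, Rabs_R0. nra.
  - specialize (Hq (dot d u v / dot d v v)).
    assert (0 < dot d v v) by (pose proof (dot_self_nonneg d v); lra).
    assert (Hk : (dot d u v) * (dot d u v) <= dot d u u * dot d v v).
    { replace (dot d u u - 2 * (dot d u v / dot d v v) * dot d u v + dot d u v / dot d v v * (dot d u v / dot d v v) * dot d v v)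
        with ((dot d u u * dot d v v - dot d u v * dot d u v) / dot d v v) in Hq by (field; lra).
      apply Rmult_le_compat_r with (r := dot d v v) in Hq; [|lra].
      unfold Rdiv in Hq. rewrite Rmult_assoc, Rinv_l, Rmult_1_r, Rmult_0_l in Hq; lra. }
    assert (Ha : Rabs (dot d u v) * Rabs (dot d u v) = dot d u v * dot d u v).
    { rewrite <- Rabs_mult. apply Rabs_right. apply Rle_ge; nra. }
    assert (0 <= norm d u * norm d v) by nra. pose proof (Rabs_pos (dot d u v)).
    rewrite <- Hu, <- Hv in Hk. nra.
Qed.

Lemma dot_le d u v : dot d u v <= norm d u * norm d v.
Proof. pose proof (cauchy_schwarz d u v). pose proof (Rle_abs (dot d u v)). lra. Qed.

Lemma norm_triangle d u v : norm d (vadd u v) <= norm d u + norm d v.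
Proof. apply norm_le_sq. pose proof (norm_nonneg d u); pose proof (norm_nonneg d v); lra.
  autorewrite with dotE. rewrite (dot_comm d v u). pose proof (dot_le d u v).
  rewrite <- (norm_sq d u), <- (norm_sq d v). nra. Qed.

Lemma norm_scal d t u : norm d (scal t u) = Rabs t * norm d u.
Proof. apply norm_of_sq. pose proof (norm_nonneg d u); pose proof (Rabs_pos t); nra.
  autorewrite with dotE. rewrite <- norm_sq.
  assert (Ht: Rabs t * Rabs t = t * t) by (rewrite <- Rabs_mult; apply Rabs_right; apply Rle_ge; nra).
  transitivity ((Rabs t * Rabs t) * (norm d u * norm d u)); [rewrite Ht; ring | ring]. Qed.

Lemma norm_opp d u : norm d (vopp u) = norm d u.
Proof. unfold norm. autorewrite with dotE. f_equal; ring. Qed.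

Lemma norm_zero d : norm d vzero = 0.
Proof. unfold norm. rewrite dot_zero_l. apply sqrt_0. Qed.

Lemma norm_zero_inv d u : Vec d u -> norm d u = 0 -> u = vzero.
Proof. intros Hu H. apply (dot_self_zero d); auto. rewrite <- norm_sq, H; ring. Qed.

Lemma norm_sub_triangle d u v w : norm d (vsub u w) <= norm d (vsub u v) + norm d (vsub v w).
Proof. replace (vsub u w) with (vadd (vsub u v) (vsub v w)) by (vext; ring). apply norm_triangle. Qed.

Lemma norm_sub_sym d u v : norm d (vsub u v) = norm d (vsub v u).
Proof. replace (vsub u v) with (vopp (vsub v u)) by (vext; ring). apply norm_opp. Qed.

Lemma norm_sub_ge d u v : norm d u - norm d v <= norm d (vsub u v).
Proof. pose proof (norm_triangle d (vsub u v) v). replace (vadd (vsub u v) v) with u in H by (vext; ring). lra. Qed.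

Lemma norm_add_sub d u v : norm d (vsub u v) <= norm d u + norm d v.
Proof. replace (vsub u v) with (vadd u (vopp v)) by (vext; ring). rewrite <- (norm_opp d v). apply norm_triangle. Qed.

Lemma coord_le_norm d u i : (i < d)%nat -> Rabs (u i) <= norm d u.
Proof. intros Hi. apply Rsqr_incr_0_var. unfold Rsqr. rewrite norm_sq.
  rewrite <- Rabs_mult, Rabs_right by (apply Rle_ge; nra).
  apply (sumR_term_le (fun i => u i * u i)); auto; intros; nra. apply norm_nonneg. Qed.

Lemma norm_le_sum_abs d u : norm d u <= sumR (fun i => Rabs (u i)) d.
Proof. apply norm_le_sq. apply sumR_nonneg; intros; apply Rabs_pos.
  unfold dot. induction d; simpl. lra.
  assert (0 <= sumR (fun i => Rabs (u i)) d) by (apply sumR_nonneg; intros; apply Rabs_pos).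
  pose proof (Rabs_pos (u d)).
  assert (u d * u d = Rabs (u d) * Rabs (u d)) by (rewrite <- Rabs_mult, Rabs_right by (apply Rle_ge; nra); auto).
  nra. Qed.

Lemma dot_cont d x a b : Rabs (dot d a x - dot d b x) <= norm d (vsub a b) * norm d x.
Proof. rewrite <- dot_sub_l. apply cauchy_schwarz. Qed.

Lemma norm_sub_eq0 n v w : Vec n v -> Vec n w -> norm n (vsub v w) = 0 -> v = w.
Proof.
  intros Hv Hw H. apply norm_zero_inv in H; auto with vec.
  apply vec_ext; intro i. apply (f_equal (fun g => g i)) in H. unfold vsub, vzero in H. lra.
Qed.

Lemma norm_diff_le d u v : Rabs (norm d u - norm d v) <= norm d (vsub u v).
Proof. unfold Rabs. destruct (Rcase_abs (norm d u - norm d v)).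
  pose proof (norm_sub_ge d v u). rewrite norm_sub_sym in H. lra. apply norm_sub_ge. Qed.

(** * Linear combinations and linear maps *)

Definition vsum (f : nat -> vec) (m : nat) : vec := fun l => sumR (fun j => f j l) m.

Definition lincomb (s : nat -> vec) (m : nat) (v : vec) : vec := vsum (fun j => scal (v j) (s j)) m.

Definition basis (j : nat) : vec := fun l => if Nat.eqb l j then 1 else 0.

Lemma vsum_S f m : vsum f (S m) = vadd (vsum f m) (f m).
Proof. reflexivity. Qed.

Lemma vsum_0 f : vsum f 0 = vzero.
Proof. reflexivity. Qed.

Lemma vsum_ext f g m : (forall j, (j < m)%nat -> f j = g j) -> vsum f m = vsum g m.
Proof. intros H. apply vec_ext; intro l. unfold vsum. apply sumR_ext. intros; rewrite H; auto. Qed.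

Lemma Vec_vsum d f m : (forall j, (j < m)%nat -> Vec d (f j)) -> Vec d (vsum f m).
Proof. intros H i Hi. unfold vsum. transitivity (sumR (fun _ => 0) m). apply sumR_ext; intros; apply H; auto.
  apply sumR_zero. Qed.

Lemma norm_vsum d f m : norm d (vsum f m) <= sumR (fun j => norm d (f j)) m.
Proof. induction m. rewrite vsum_0, norm_zero. simpl; lra.
  rewrite vsum_S. simpl. eapply Rle_trans. apply norm_triangle. lra. Qed.

Lemma vsum_plus f g m : vsum (fun j => vadd (f j) (g j)) m = vadd (vsum f m) (vsum g m).
Proof. apply vec_ext; intro l. unfold vsum, vadd. apply sumR_plus. Qed.

Lemma vsum_scal c f m : vsum (fun j => scal c (f j)) m = scal c (vsum f m).
Proof. apply vec_ext; intro l. unfold vsum, scal. apply sumR_mult. Qed.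

Lemma vsum_sub f g m : vsum (fun j => vsub (f j) (g j)) m = vsub (vsum f m) (vsum g m).
Proof. apply vec_ext; intro l. unfold vsum, vsub. apply sumR_minus. Qed.

Lemma Vec_lincomb d s m v : (forall j, (j < m)%nat -> Vec d (s j)) -> Vec d (lincomb s m v).
Proof. intros H. apply Vec_vsum. intros. apply Vec_scal; auto. Qed.

Lemma lincomb_lin s m a b u v :
  lincomb s m (vadd (scal a u) (scal b v)) = vadd (scal a (lincomb s m u)) (scal b (lincomb s m v)).
Proof. unfold lincomb. rewrite <- !vsum_scal, <- vsum_plus. apply vsum_ext. intros j _.
  apply vec_ext; intro l; unfold vadd, scal; ring. Qed.

Lemma lincomb_sub s m u v : lincomb s m (vsub u v) = vsub (lincomb s m u) (lincomb s m v).
Proof. unfold lincomb. rewrite <- vsum_sub. apply vsum_ext. intros j _. apply vec_ext; intro l; unfold vsub, scal; ring. Qed.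

Lemma lincomb_scal s m a u : lincomb s m (scal a u) = scal a (lincomb s m u).
Proof. unfold lincomb. rewrite <- vsum_scal. apply vsum_ext. intros j _. apply vec_ext; intro l; unfold scal; ring. Qed.

Lemma lincomb_opp s m u : lincomb s m (vopp u) = vopp (lincomb s m u).
Proof. replace (vopp u) with (scal (-1) u) by (apply vec_ext; intro; unfold vopp, scal; ring).
  rewrite lincomb_scal. apply vec_ext; intro; unfold vopp, scal; ring. Qed.

Lemma lincomb_norm_le d s m v : norm d (lincomb s m v) <= sumR (fun j => Rabs (v j) * norm d (s j)) m.
Proof. unfold lincomb. eapply Rle_trans. apply norm_vsum. apply sumR_le. intros; rewrite norm_scal; lra. Qed.

Lemma Vec_basis m j : (j < m)%nat -> Vec m (basis j).
Proof. intros Hj i Hi. unfold basis. destruct (Nat.eqb_spec i j); [lia|auto]. Qed.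

Lemma dot_basis m v j : (j < m)%nat -> dot m v (basis j) = v j.
Proof. intros Hj. unfold dot, basis. rewrite <- (sumR_single (v j) j m Hj). apply sumR_ext.
  intros i Hi. destruct (Nat.eqb_spec i j); subst; ring. Qed.

Lemma norm_basis m j : (j < m)%nat -> norm m (basis j) = 1.
Proof. intros Hj. apply norm_of_sq. lra. rewrite dot_basis by auto. unfold basis. rewrite Nat.eqb_refl. ring. Qed.

Lemma vec_expand m v : Vec m v -> v = vsum (fun j => scal (v j) (basis j)) m.
Proof. intros Hv. apply vec_ext; intro l. unfold vsum, scal, basis.
  destruct (le_lt_dec m l). rewrite Hv by auto. transitivity (sumR (fun _ => 0) m); [|apply sumR_ext; intros; destruct (Nat.eqb_spec l i); [lia|ring]].
  symmetry; apply sumR_zero.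
  rewrite <- (sumR_single (v l) l m) by auto. apply sumR_ext. intros i Hi.
  destruct (Nat.eqb_spec l i), (Nat.eqb_spec i l); subst; try lia; ring. Qed.

Definition LinOn (m : nat) (T : vec -> vec) : Prop :=
  forall a b u v, Vec m u -> Vec m v -> T (vadd (scal a u) (scal b v)) = vadd (scal a (T u)) (scal b (T v)).

Lemma LinOn_zero m T : LinOn m T -> T vzero = vzero.
Proof. intros H. specialize (H 0 0 vzero vzero (Vec_zero m) (Vec_zero m)).
  replace (vadd (scal 0 vzero) (scal 0 vzero)) with vzero in H by (apply vec_ext; intro; unfold vadd, scal, vzero; ring).
  rewrite H. apply vec_ext; intro; unfold vadd, scal, vzero; ring. Qed.

Lemma LinOn_add m T u v : LinOn m T -> Vec m u -> Vec m v -> T (vadd u v) = vadd (T u) (T v).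
Proof. intros H Hu Hv. specialize (H 1 1 u v Hu Hv).
  replace (vadd (scal 1 u) (scal 1 v)) with (vadd u v) in H by (apply vec_ext; intro; unfold vadd, scal; ring).
  rewrite H. apply vec_ext; intro; unfold vadd, scal; ring. Qed.

Lemma LinOn_scal m T a u : LinOn m T -> Vec m u -> T (scal a u) = scal a (T u).
Proof. intros H Hu. pose proof (LinOn_zero m T H) as H0. specialize (H a 0 u vzero Hu (Vec_zero m)).
  replace (vadd (scal a u) (scal 0 vzero)) with (scal a u) in H by (apply vec_ext; intro; unfold vadd, scal, vzero; ring).
  rewrite H, H0. apply vec_ext; intro; unfold vadd, scal, vzero; ring. Qed.

Lemma LinOn_sub m T u v : LinOn m T -> Vec m u -> Vec m v -> T (vsub u v) = vsub (T u) (T v).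
Proof. intros H Hu Hv. specialize (H 1 (-1) u v Hu Hv).
  replace (vadd (scal 1 u) (scal (-1) v)) with (vsub u v) in H by (apply vec_ext; intro; unfold vadd, vsub, scal; ring).
  rewrite H. apply vec_ext; intro; unfold vadd, vsub, scal; ring. Qed.

Lemma lin_expand m T v : LinOn m T -> Vec m v -> T v = lincomb (fun j => T (basis j)) m v.
Proof. intros HT Hv. rewrite (vec_expand m v Hv) at 1. unfold lincomb.
  assert (forall k, (k <= m)%nat -> T (vsum (fun j => scal (v j) (basis j)) k) = vsum (fun j => scal (v j) (T (basis j))) k).
  { induction k; intros Hk. rewrite !vsum_0. apply (LinOn_zero m T HT).
    rewrite !vsum_S. rewrite (LinOn_add m T); auto.
    rewrite IHk by lia. rewrite (LinOn_scal m T) by (auto; apply Vec_basis; lia). auto.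
    apply Vec_vsum. intros. apply Vec_scal, Vec_basis; lia. apply Vec_scal, Vec_basis; lia. }
  apply H; auto. Qed.

Lemma lincomb_LinOn s m : LinOn m (lincomb s m).
Proof. intros a b u v _ _. apply lincomb_lin. Qed.

Lemma lincomb_diff s1 s2 m v : vsub (lincomb s1 m v) (lincomb s2 m v) = lincomb (fun j => vsub (s1 j) (s2 j)) m v.
Proof. unfold lincomb. rewrite <- vsum_sub. apply vsum_ext. intros. apply vec_ext; intro; unfold vsub, scal; ring. Qed.

Lemma lincomb_basis s m j : (j < m)%nat -> lincomb s m (basis j) = s j.
Proof.
  intros Hj. apply vec_ext; intro l. unfold lincomb, vsum, scal, basis.
  rewrite <- (sumR_single (s j l) j m Hj). apply sumR_ext. intros i Hi.
  destruct (Nat.eqb_spec i j); subst; ring.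
Qed.

Definition swap_idx (k m' j : nat) : nat := if Nat.eqb j k then m' else if Nat.eqb j m' then k else j.

Lemma swap_idx_inv k m' j : swap_idx k m' (swap_idx k m' j) = j.
Proof. unfold swap_idx. destruct (Nat.eqb_spec j k) as [h1|h1].
  - destruct (Nat.eqb_spec m' k); [lia|]. rewrite Nat.eqb_refl. lia.
  - destruct (Nat.eqb_spec j m') as [h2|h2].
    + rewrite Nat.eqb_refl. lia.
    + destruct (Nat.eqb_spec j k); [lia|]. destruct (Nat.eqb_spec j m'); lia. Qed.

Lemma swap_idx_lt k m' j : (k <= m')%nat -> (j < S m')%nat -> (swap_idx k m' j < S m')%nat.
Proof. intros. unfold swap_idx. destruct (Nat.eqb_spec j k); destruct (Nat.eqb_spec j m'); lia. Qed.

Lemma sumR_swap f k m' : (k <= m')%nat -> sumR (fun j => f (swap_idx k m' j)) (S m') = sumR f (S m').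
Proof. intros Hk. destruct (Nat.eq_dec k m').
  - subst. apply sumR_ext. intros j Hj. unfold swap_idx. destruct (Nat.eqb_spec j m'); subst; auto.
  - simpl. unfold swap_idx at 2. rewrite Nat.eqb_refl. destruct (Nat.eqb_spec m' k); [lia|].
    rewrite (sumR_update f (fun j => f (swap_idx k m' j)) m' k) by (try lia; intros i Hi Hik; unfold swap_idx;
      destruct (Nat.eqb_spec i k); destruct (Nat.eqb_spec i m'); try lia; auto).
    unfold swap_idx. rewrite Nat.eqb_refl. lra. Qed.

Lemma vsum_swap f k m' : (k <= m')%nat -> vsum (fun j => f (swap_idx k m' j)) (S m') = vsum f (S m').
Proof. intros Hk. apply vec_ext; intro l. unfold vsum. apply (sumR_swap (fun j => f j l)); auto. Qed.

Lemma Vec0_zero v : Vec 0 v -> v = vzero.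
Proof. intros H. apply vec_ext; intro i; apply H; lia. Qed.

Lemma lin_dependent_of_lt_dim d : forall m (w : nat -> vec), (d < m)%nat -> (forall j, (j < m)%nat -> Vec d (w j)) ->
  exists c : nat -> R, (exists j, (j < m)%nat /\ c j <> 0) /\ vsum (fun j => scal (c j) (w j)) m = vzero.
Proof.
  (* Gaussian elimination of the last coordinate, after moving a vector with nonzero last coordinate
     to the end of the family. *)
  induction d as [|d IH]; intros m w Hm Hw.
  - exists (fun j => if Nat.eqb j 0 then 1 else 0). split. exists O. split. lia. simpl. lra.
    apply Vec0_zero. apply Vec_vsum. intros. apply Vec_scal; auto.
  - destruct (classic (forall j, (j < m)%nat -> w j d = 0)) as [Hz|Hnz].
    + apply IH. lia. intros j Hj i Hi. destruct (Nat.eq_dec i d). subst; auto. apply Hw; auto; lia.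
    + apply not_all_ex_not in Hnz. destruct Hnz as [k Hk].
      assert (Hkm : (k < m)%nat) by (apply NNPP; intro; apply Hk; intro; lia).
      assert (Hkd : w k d <> 0) by (intro; apply Hk; auto).
      destruct m as [|m']. lia.
      set (wt := fun j => w (swap_idx k m' j)).
      assert (Hwt : wt m' = w k). { unfold wt, swap_idx. rewrite Nat.eqb_refl. destruct (Nat.eqb_spec m' k); subst; auto. }
      set (w' := fun j => vsub (wt j) (scal (wt j d / wt m' d) (wt m'))).
      destruct (IH m' w') as [c' [[j0 [Hj0 Hc0]] Hsum]]. lia.
      { intros j Hj i Hi. unfold w', vsub, scal. destruct (Nat.eq_dec i d).
        - subst. rewrite Hwt. field. auto.
        - assert (E1 : wt j i = 0) by (unfold wt; apply Hw; [apply swap_idx_lt; lia| lia]).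
          rewrite E1, Hwt, (Hw k Hkm i) by lia. ring. }
      set (ct := fun j => if Nat.ltb j m' then c' j else - sumR (fun i => c' i * (wt i d / wt m' d)) m').
      exists (fun j => ct (swap_idx k m' j)). split.
      * exists (swap_idx k m' j0). split. apply swap_idx_lt; lia. rewrite swap_idx_inv. unfold ct.
        destruct (Nat.ltb_spec j0 m'); [auto|lia].
      * assert (E : vsum (fun j => scal (ct (swap_idx k m' j)) (w j)) (S m') =
                    vsum (fun j => scal (ct (swap_idx k m' j)) (wt (swap_idx k m' j))) (S m')).
        { apply vsum_ext. intros j _. unfold wt. rewrite swap_idx_inv. auto. }
        rewrite E. rewrite (vsum_swap (fun j => scal (ct j) (wt j))) by lia.
        rewrite vsum_S. rewrite <- Hsum. apply vec_ext; intro l. unfold vsum, vadd, scal, w', vsub.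
        unfold ct. destruct (Nat.ltb_spec m' m'); [lia|].
        rewrite (sumR_ext _ (fun j => c' j * wt j l)) by (intros j Hj; destruct (Nat.ltb_spec j m'); [auto|lia]).
        rewrite (sumR_ext (fun j => c' j * (wt j l - wt j d / wt m' d * wt m' l))
                  (fun j => c' j * wt j l - (c' j * (wt j d / wt m' d)) * wt m' l)) by (intros; ring).
        rewrite sumR_minus. rewrite (sumR_ext (fun j => c' j * (wt j d / wt m' d) * wt m' l)
                  (fun j => wt m' l * (c' j * (wt j d / wt m' d)))) by (intros; ring).
        rewrite sumR_mult. ring.
Qed.

Lemma dim_le m d T : LinOn m T -> (forall v, Vec m v -> Vec d (T v)) ->
  (forall u v, Vec m u -> Vec m v -> T u = T v -> u = v) -> (m <= d)%nat.
Proof.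
  intros HL HV HI. destruct (le_lt_dec m d) as [h|h]; auto. exfalso.
  destruct (lin_dependent_of_lt_dim d m (fun j => T (basis j)) h) as [c [[j [Hj Hc]] Hs]].
  intros; apply HV, Vec_basis; auto.
  set (v := vsum (fun j => scal (c j) (basis j)) m).
  assert (Hv : Vec m v) by (apply Vec_vsum; intros; apply Vec_scal, Vec_basis; auto).
  assert (Hcv : forall i, (i < m)%nat -> v i = c i).
  { intros i Hi. unfold v, vsum, scal, basis. rewrite <- (sumR_single (c i) i m Hi). apply sumR_ext.
    intros l Hl. destruct (Nat.eqb_spec i l), (Nat.eqb_spec l i); subst; try lia; ring. }
  assert (T v = T vzero).
  { rewrite (LinOn_zero m T HL). rewrite (lin_expand m T v HL Hv). rewrite <- Hs. unfold lincomb.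
    apply vsum_ext. intros i Hi. rewrite Hcv; auto. }
  apply HI in H; auto with vec. apply Hc. rewrite <- Hcv by auto. rewrite H. reflexivity.
Qed.

(** * Null sequences and subsequences *)

Definition null (a : nat -> R) : Prop :=
  forall eps, 0 < eps -> exists N, forall k, (N <= k)%nat -> Rabs (a k) < eps.

Lemma null_le (a b : nat -> R) : null a -> (exists N, forall k, (N <= k)%nat -> Rabs (b k) <= a k) -> null b.
Proof. intros Ha [N0 HN] eps He. destruct (Ha eps He) as [N1 H1]. exists (max N0 N1). intros k Hk.
  specialize (HN k ltac:(lia)). specialize (H1 k ltac:(lia)). pose proof (Rle_abs (a k)). lra. Qed.

Lemma null_plus a b : null a -> null b -> null (fun k => a k + b k).
Proof. intros Ha Hb eps He. destruct (Ha (eps/2) ltac:(lra)) as [N1 H1]. destruct (Hb (eps/2) ltac:(lra)) as [N2 H2].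
  exists (max N1 N2). intros k Hk. specialize (H1 k ltac:(lia)). specialize (H2 k ltac:(lia)).
  pose proof (Rabs_triang (a k) (b k)). lra. Qed.

Lemma null_scal c a : null a -> null (fun k => c * a k).
Proof. intros Ha eps He. destruct (Ha (eps / (Rabs c + 1))) as [N H].
  apply Rdiv_lt_0_compat; [lra| pose proof (Rabs_pos c); lra].
  exists N. intros k Hk. specialize (H k Hk). rewrite Rabs_mult.
  pose proof (Rabs_pos c). pose proof (Rabs_pos (a k)).
  assert (Rabs c * Rabs (a k) <= (Rabs c + 1) * Rabs (a k)) by nra.
  assert ((Rabs c + 1) * Rabs (a k) < (Rabs c + 1) * (eps / (Rabs c + 1))) by (apply Rmult_lt_compat_l; lra).
  replace ((Rabs c + 1) * (eps / (Rabs c + 1))) with eps in H3 by (field; lra). lra. Qed.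

Lemma null_const0 : null (fun _ => 0).
Proof. intros eps He. exists O. intros; rewrite Rabs_R0; lra. Qed.

Lemma null_sum (a : nat -> nat -> R) m : (forall j, (j < m)%nat -> null (a j)) ->
  null (fun k => sumR (fun j => a j k) m).
Proof. induction m; intros H; simpl. apply null_const0.
  apply null_plus. apply IHm; intros; apply H; lia. apply H; lia. Qed.

Lemma null_subseq a (phi : nat -> nat) : (forall k, (k <= phi k)%nat) -> null a -> null (fun k => a (phi k)).
Proof. intros Hp Ha eps He. destruct (Ha eps He) as [N H]. exists N. intros k Hk. apply H. specialize (Hp k). lia. Qed.

Lemma null_abs a : null a -> null (fun k => Rabs (a k)).
Proof. intros Ha eps He. destruct (Ha eps He) as [N H]. exists N; intros k Hk. rewrite Rabs_Rabsolu; auto. Qed.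

Lemma null_lim_le a c : null (fun k => a k - c) -> forall b, (exists N, forall k, (N <= k)%nat -> b <= a k) -> b <= c.
Proof. intros H b [N HN]. destruct (Rle_dec b c); auto. exfalso.
  destruct (H (b - c) ltac:(lra)) as [N1 H1]. specialize (H1 (max N N1) ltac:(lia)). specialize (HN (max N N1) ltac:(lia)).
  pose proof (Rle_abs (a (max N N1) - c)). lra. Qed.

Lemma null_lim_ge a c : null (fun k => a k - c) -> forall b, (exists N, forall k, (N <= k)%nat -> a k <= b) -> c <= b.
Proof. intros H b [N HN]. destruct (Rle_dec c b); auto. exfalso.
  destruct (H (c - b) ltac:(lra)) as [N1 H1]. specialize (H1 (max N N1) ltac:(lia)). specialize (HN (max N N1) ltac:(lia)).
  pose proof (Rle_abs (-(a (max N N1) - c))) as Hq. rewrite Rabs_Ropp in Hq. lra. Qed.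

Lemma null_zero_const c : null (fun _ => c) -> c = 0.
Proof. intros H. destruct (Req_dec c 0); auto. exfalso. destruct (H (Rabs c)) as [N HN].
  apply Rabs_pos_lt; auto. specialize (HN N (le_n N)). lra. Qed.

Lemma conv_null d f v : ConvergesTo d f v <-> null (fun k => norm d (vsub (f k) v)).
Proof. unfold ConvergesTo, null, dist. split; intros H eps He; destruct (H eps He) as [N HN]; exists N; intros k Hk;
  specialize (HN k Hk); rewrite ?Rabs_right in * by (apply Rle_ge, norm_nonneg); auto. Qed.

Lemma null_limit_unique d (f : nat -> vec) a b : Vec d a -> Vec d b ->
  null (fun k => norm d (vsub (f k) a)) -> null (fun k => norm d (vsub (f k) b)) -> a = b.
Proof. intros Ha Hb H1 H2. assert (null (fun _ => norm d (vsub a b))).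
  { apply null_le with (a := fun k => norm d (vsub (f k) a) + norm d (vsub (f k) b)). apply null_plus; auto.
    exists O. intros k _. rewrite Rabs_right by (apply Rle_ge, norm_nonneg). rewrite (norm_sub_sym d (f k) a).
    apply norm_sub_triangle. }
  apply null_zero_const in H. apply norm_zero_inv in H; auto with vec.
  apply vec_ext; intro i. apply (f_equal (fun g => g i)) in H. unfold vsub, vzero in H. lra. Qed.

Lemma lincomb_conv_cols d m (sk : nat -> nat -> vec) sl :
  (forall j, (j < m)%nat -> null (fun k => norm d (vsub (sk k j) (sl j)))) ->
  forall v, null (fun k => norm d (vsub (lincomb (sk k) m v) (lincomb sl m v))).
Proof. intros H v. apply null_le with (a := fun k => sumR (fun j => Rabs (v j) * norm d (vsub (sk k j) (sl j))) m).
  - apply (null_sum (fun j k => Rabs (v j) * norm d (vsub (sk k j) (sl j)))). intros j Hj. apply null_scal. auto.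
  - exists O. intros k _. rewrite Rabs_right by (apply Rle_ge, norm_nonneg). rewrite lincomb_diff. apply lincomb_norm_le. Qed.

Lemma lincomb_conv_cols_args d m (sk : nat -> nat -> vec) sl C (vk : nat -> vec) v :
  (forall j, (j < m)%nat -> null (fun k => norm d (vsub (sk k j) (sl j)))) ->
  (forall k w, Vec m w -> norm d (lincomb (sk k) m w) <= C * norm m w) ->
  (forall k, Vec m (vk k)) -> Vec m v -> null (fun k => norm m (vsub (vk k) v)) ->
  null (fun k => norm d (vsub (lincomb (sk k) m (vk k)) (lincomb sl m v))).
Proof. intros H HC Hvk Hv Hn. apply null_le with (a := fun k => C * norm m (vsub (vk k) v) + norm d (vsub (lincomb (sk k) m v) (lincomb sl m v))).
  - apply null_plus. apply null_scal; auto. apply lincomb_conv_cols; auto.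
  - exists O. intros k _. rewrite Rabs_right by (apply Rle_ge, norm_nonneg).
    eapply Rle_trans. apply (norm_sub_triangle d _ (lincomb (sk k) m v)). rewrite <- lincomb_sub.
    pose proof (HC k (vsub (vk k) v) ltac:(auto with vec)). lra. Qed.

Definition incr (phi : nat -> nat) : Prop := forall k, (phi k < phi (S k))%nat.

Lemma incr_ge phi : incr phi -> forall k, (k <= phi k)%nat.
Proof. intros H; induction k. lia. specialize (H k). lia. Qed.

Lemma incr_mono phi : incr phi -> forall a b, (a <= b)%nat -> (phi a <= phi b)%nat.
Proof. intros H a b Hab. induction Hab. lia. specialize (H m). lia. Qed.

Lemma incr_comp phi psi : incr phi -> incr psi -> incr (fun k => phi (psi k)).
Proof. intros H1 H2 k. specialize (H2 k). assert (phi (S (psi k)) <= phi (psi (S k)))%nat by (apply incr_mono; auto).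
  specialize (H1 (psi k)). lia. Qed.

Lemma bolzano_weierstrass_subseq (un : nat -> R) M : (forall k, Rabs (un k) <= M) ->
  exists phi L, incr phi /\ null (fun k => un (phi k) - L).
Proof.
  intros HM. destruct (Bolzano_Weierstrass un (fun c => -M <= c <= M) (compact_P3 (-M) M)) as [L HL].
  { intros k. specialize (HM k). unfold Rabs in HM. destruct (Rcase_abs (un k)); lra. }
  assert (Hc : forall (k N : nat), exists p, (N <= p)%nat /\ Rabs (un p - L) < / (INR k + 1)).
  { intros k N. assert (Hp : 0 < / (INR k + 1)) by (apply Rinv_0_lt_compat; pose proof (pos_INR k); lra).
    assert (Hn : neighbourhood (disc L (mkposreal _ Hp)) L) by (exists (mkposreal _ Hp); intros z Hz; auto).
    destruct (HL _ N Hn) as [p [Hp1 Hp2]]. exists p. split; auto. }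
  set (g := fun k N => proj1_sig (constructive_indefinite_description _ (Hc k N))).
  assert (Hg : forall k N, (N <= g k N)%nat /\ Rabs (un (g k N) - L) < / (INR k + 1)).
  { intros k N. unfold g. destruct (constructive_indefinite_description _ (Hc k N)); simpl; auto. }
  set (phi := fix f (k : nat) : nat := match k with O => g O O | S k' => g k (S (f k')) end).
  exists phi, L. split.
  - intros k. simpl. destruct (Hg (S k) (S (phi k))). lia.
  - intros eps He. destruct (archimed_cor1 eps He) as [K [HK HK0]]. exists K. intros k Hk.
    assert (Rabs (un (phi k) - L) < / (INR k + 1)).
    { destruct k; simpl; apply Hg. }
    eapply Rlt_le_trans; [apply H|]. apply Rlt_le. eapply Rle_lt_trans; [|apply HK].
    apply Rinv_le_contravar. apply lt_0_INR; auto. apply le_INR in Hk. lra.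
Qed.

Lemma bounded_family_subseq {I : Type} (l : list I) (a : I -> nat -> R) M :
  (forall i, In i l -> forall k, Rabs (a i k) <= M) ->
  exists phi, incr phi /\ forall i, In i l -> exists L, null (fun k => a i (phi k) - L).
Proof.
  induction l as [|i0 l IH]; intros HM.
  - exists (fun k => k). split. intros k; lia. intros i [].
  - destruct IH as [phi [Hphi Hl]]. intros; apply HM; simpl; auto.
    destruct (bolzano_weierstrass_subseq (fun k => a i0 (phi k)) M) as [psi [L0 [Hpsi H0]]]. intros; apply HM; simpl; auto.
    exists (fun k => phi (psi k)). split. apply incr_comp; auto.
    intros i [<-|Hi]. exists L0; auto.
    destruct (Hl i Hi) as [L HL]. exists L. apply (null_subseq (fun k => a i (phi k) - L) psi); auto.
    apply incr_ge; auto.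
Qed.

Lemma null_norm_from_coords m (f : nat -> vec) v :
  (forall l, (l < m)%nat -> null (fun k => f k l - v l)) -> null (fun k => norm m (vsub (f k) v)).
Proof. intros H. apply null_le with (a := fun k => sumR (fun l => Rabs (f k l - v l)) m).
  apply (null_sum (fun l k => Rabs (f k l - v l))). intros; apply null_abs; auto.
  exists O. intros k _. rewrite Rabs_right by (apply Rle_ge, norm_nonneg). apply norm_le_sum_abs. Qed.

Lemma bounded_vec_subseq m (vk : nat -> vec) M : (forall k, norm m (vk k) <= M) ->
  exists phi v, incr phi /\ Vec m v /\ null (fun k => norm m (vsub (vk (phi k)) v)).
Proof.
  intros HM. destruct (bounded_family_subseq (seq 0 m) (fun l k => vk k l) M) as [phi [Hphi Hl]].
  { intros l Hl k. apply in_seq in Hl. eapply Rle_trans; [apply (coord_le_norm m); lia| apply HM]. }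
  destruct (functional_choice (fun l L => ((l < m)%nat -> null (fun k => vk (phi k) l - L)) /\
                                          ((m <= l)%nat -> L = 0))) as [v Hv].
  { intros l. destruct (le_lt_dec m l) as [Hml|Hlm].
    - exists 0. split; [lia| auto].
    - destruct (Hl l) as [L HL]; [apply in_seq; lia|]. exists L. split; [auto| lia]. }
  exists phi, v. split; [auto| split].
  - intros l Hml. apply Hv; auto.
  - apply null_norm_from_coords. intros l Hlm. apply Hv; auto.
Qed.

Lemma bounded_cols_subseq d m (sk : nat -> nat -> vec) M :
  (forall k j, (j < m)%nat -> norm d (sk k j) <= M) ->
  exists phi sl, incr phi /\ forall j, (j < m)%nat ->
    Vec d (sl j) /\ null (fun k => norm d (vsub (sk (phi k) j) (sl j))).
Proof.
  induction m as [|m IH]; intros HM.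
  - exists (fun k => k), (fun _ => vzero). split; [intros k; lia| intros j Hj; lia].
  - destruct IH as [phi [sl [Hphi Hsl]]]; [intros; apply HM; lia|].
    destruct (bounded_vec_subseq d (fun k => sk (phi k) m) M) as [psi [v [Hpsi [Hv Hconv]]]].
    { intros k. apply HM; lia. }
    exists (fun k => phi (psi k)), (fun j => if Nat.eqb j m then v else sl j).
    split; [apply incr_comp; auto|]. intros j Hj. destruct (Nat.eqb_spec j m) as [->|Hjm]; [auto|].
    destruct (Hsl j ltac:(lia)) as [Hslj Hcj]. split; auto.
    apply (null_subseq (fun k => norm d (vsub (sk (phi k) j) (sl j))) psi); auto. apply incr_ge; auto.
Qed.

Lemma INR_close_eq a b : Rabs (INR a - INR b) < 1 -> a = b.
Proof. intros H. destruct (lt_eq_lt_dec a b) as [[h|h]|h]; auto; exfalso.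
  - apply le_INR in h. rewrite S_INR in h. rewrite Rabs_left in H by lra. lra.
  - apply le_INR in h. rewrite S_INR in h. rewrite Rabs_right in H by lra. lra. Qed.

Lemma bounded_nat_const_subseq (f : nat -> nat) D : (forall k, (f k <= D)%nat) ->
  exists phi m, incr phi /\ forall k, f (phi k) = m.
Proof.
  intros HD. destruct (bolzano_weierstrass_subseq (fun k => INR (f k)) (INR D)) as [phi [L [Hphi HL]]].
  { intros k. rewrite Rabs_right by (apply Rle_ge, pos_INR). apply le_INR, HD. }
  destruct (HL (1/2) ltac:(lra)) as [N HN].
  exists (fun k => phi (k + N)%nat), (f (phi N)). split.
  - intros k. apply Hphi.
  - intros k. apply INR_close_eq.
    pose proof (HN (k + N)%nat ltac:(lia)). pose proof (HN N (le_n N)). simpl in *.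
    replace (INR (f (phi (k + N)%nat)) - INR (f (phi N)))
      with ((INR (f (phi (k + N)%nat)) - L) - (INR (f (phi N)) - L)) by ring.
    eapply Rle_lt_trans; [apply Rabs_triang|]. rewrite Rabs_Ropp. lra.
Qed.

Lemma ConvergesTo_subseq d f v phi : incr phi -> ConvergesTo d f v -> ConvergesTo d (fun k => f (phi k)) v.
Proof.
  intros Hphi Hf. apply conv_null. apply (null_subseq (fun k => norm d (vsub (f k) v))); [apply incr_ge; auto|].
  apply conv_null, Hf.
Qed.

(** * Compactness and convex bodies *)

Lemma list_max (l : list nat) : exists M, forall k, In k l -> (k <= M)%nat.
Proof. induction l. exists O; intros k []. destruct IHl as [M HM]. exists (max a M).
  intros k [->|Hk]. lia. specialize (HM k Hk); lia. Qed.

Lemma compact_closed d K y : compact d K -> (forall v, K v -> Vec d v) -> Vec d y ->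
  (forall eps, 0 < eps -> exists z, K z /\ norm d (vsub z y) < eps) -> K y.
Proof.
  intros HK HV Hy Hc. apply NNPP; intro Hn.
  set (U := fun (k : nat) (z : vec) => / (INR k + 1) < norm d (vsub z y)).
  destruct (HK nat U) as [l Hl].
  - intros k v Hv Hu. exists (norm d (vsub v y) - / (INR k + 1)). split. unfold U in Hu; lra.
    intros w Hw Hd. unfold U. unfold dist in Hd. pose proof (norm_sub_triangle d v w y). rewrite norm_sub_sym in Hd. lra.
  - intros v Hv. assert (norm d (vsub v y) > 0).
    { pose proof (norm_nonneg d (vsub v y)). destruct (Req_dec (norm d (vsub v y)) 0); [|lra].
      exfalso. apply Hn. apply norm_zero_inv in H0; [|apply Vec_sub; auto; apply HV; auto].
      assert (Hvy : v = y). { apply vec_ext; intro i. apply (f_equal (fun f => f i)) in H0. unfold vsub, vzero in H0. lra. }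
      rewrite <- Hvy; auto. }
    destruct (archimed_cor1 (norm d (vsub v y)) H) as [N [HN HN0]]. exists N. unfold U.
    eapply Rle_lt_trans; [|apply HN]. apply Rinv_le_contravar. apply lt_0_INR; auto. lra.
  - destruct (list_max l) as [M HM].
    destruct (Hc (/ (INR M + 1))) as [z [Kz Hz]]. apply Rinv_0_lt_compat. pose proof (pos_INR M); lra.
    destruct (Hl z Kz) as [k [Hk Uk]]. unfold U in Uk. specialize (HM k Hk).
    assert (/ (INR M + 1) <= / (INR k + 1)). apply Rinv_le_contravar. pose proof (pos_INR k); lra.
    apply le_INR in HM. lra. lra.
Qed.

Lemma compact_bounded d K : compact d K -> exists R, 0 < R /\ forall z, K z -> norm d z <= R.
Proof.
  intros HK. set (U := fun (k : nat) (z : vec) => norm d z < INR k).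
  destruct (HK nat U) as [l Hl].
  - intros k v Hv Hu. exists (INR k - norm d v). split. unfold U in Hu; lra.
    intros w Hw Hd. unfold U. unfold dist in Hd. pose proof (norm_triangle d (vsub w v) v).
    replace (vadd (vsub w v) v) with w in H by (apply vec_ext; intro; unfold vadd, vsub; ring). lra.
  - intros v Hv. destruct (INR_unbounded (norm d v)) as [N HN]. exists N. unfold U; lra.
  - destruct (list_max l) as [M HM]. exists (INR M + 1). split. pose proof (pos_INR M); lra.
    intros z Kz. destruct (Hl z Kz) as [k [Hk Uk]]. unfold U in Uk. specialize (HM k Hk). apply le_INR in HM. lra.
Qed.

Lemma inner_ball d B : SymConvexBody d B -> exists rho, 0 < rho /\ forall z, Vec d z -> norm d z < rho -> B z.
Proof.
  intros [HV [Hc [Hcv [[p [eps [Hp [He Hb]]]] Hs]]]]. exists eps. split; auto. intros z Hz Hn.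
  assert (B1 : B (vadd p z)). { apply Hb. auto with vec. unfold dist.
    replace (vsub (vadd p z) p) with z by (apply vec_ext; intro; unfold vadd, vsub; ring). auto. }
  assert (B2 : B (vsub p z)). { apply Hb. auto with vec. unfold dist.
    replace (vsub (vsub p z) p) with (vopp z) by (apply vec_ext; intro; unfold vopp, vsub; ring). rewrite norm_opp; auto. }
  apply Hs in B2. specialize (Hcv _ _ (1/2) B1 B2 ltac:(lra)).
  replace z with (vadd (scal (1 / 2) (vadd p z)) (scal (1 - 1 / 2) (vopp (vsub p z)))); auto.
  apply vec_ext; intro; unfold vadd, scal, vopp, vsub; field.
Qed.

Lemma convex_shrink_mem d B rho y lam z : SymConvexBody d B -> 0 < rho ->
  (forall z, Vec d z -> norm d z < rho -> B z) -> B y -> 0 <= lam < 1 -> Vec d z ->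
  norm d (vsub z (scal lam y)) < (1 - lam) * rho -> B z.
Proof.
  intros [HV [Hc [Hcv _]]] Hr Hb By Hl Hz Hn.
  set (q := scal (/ (1 - lam)) (vsub z (scal lam y))).
  assert (Bq : B q). { apply Hb. unfold q; auto with vec. unfold q. rewrite norm_scal.
    rewrite Rabs_right by (apply Rle_ge, Rlt_le, Rinv_0_lt_compat; lra).
    apply (Rmult_lt_reg_l (1 - lam)). lra. rewrite <- Rmult_assoc, Rinv_r, Rmult_1_l by lra. auto. }
  specialize (Hcv _ _ lam By Bq ltac:(lra)).
  replace z with (vadd (scal lam y) (scal (1 - lam) q)); auto. unfold q.
  apply vec_ext; intro; unfold vadd, scal, vsub; field; lra.
Qed.

Fixpoint somes {I : Type} (l : list (option I)) : list I :=
  match l with nil => nil | Some i :: t => i :: somes t | None :: t => somes t end.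

Lemma in_somes {I : Type} (l : list (option I)) i : In (Some i) l -> In i (somes l).
Proof. induction l as [|[a|] t IH]; simpl; intros H; auto. destruct H as [H|H]. inversion H; auto. right; auto.
  destruct H as [H|H]. discriminate. auto. Qed.

Lemma compact_section d B x : compact d B -> compact d (section d B x).
Proof.
  intros HB I U HU Hcov.
  set (U' := fun (o : option I) => match o with Some i => U i | None => fun y => dot d y x <> 0 end).
  destruct (HB (option I) U') as [l Hl].
  - intros [i|]; simpl. apply HU. intros v Hv Hn.
    exists (Rabs (dot d v x) / (norm d x + 1)). split. apply Rdiv_lt_0_compat. apply Rabs_pos_lt; auto. pose proof (norm_nonneg d x); lra.
    intros w Hw Hd Hw0. pose proof (dot_cont d x v w). rewrite Hw0, Rminus_0_r in H.
    unfold dist in Hd. rewrite norm_sub_sym in Hd. pose proof (norm_nonneg d x).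
    pose proof (norm_nonneg d (vsub v w)).
    apply (Rmult_lt_compat_r (norm d x + 1)) in Hd; [|lra]. unfold Rdiv in Hd. rewrite Rmult_assoc, Rinv_l, Rmult_1_r in Hd by lra.
    nra.
  - intros v Hv. destruct (Req_dec (dot d v x) 0). destruct (Hcov v) as [i Hi]. split; auto. exists (Some i); auto.
    exists None; simpl; auto.
  - exists (somes l). intros v [Bv Hv]. destruct (Hl v Bv) as [[i|] [Hin Hu]]. exists i; split; auto. apply in_somes; auto.
    simpl in Hu. contradiction.
Qed.

Lemma compact_pullback d m (K : vec -> Prop) (S : vec -> vec) c (K' : vec -> Prop) :
  compact d K -> 0 < c ->
  (forall v w, Vec m v -> Vec m w -> c * norm m (vsub v w) <= norm d (vsub (S v) (S w))) ->
  (forall v, K' v <-> Vec m v /\ K (S v)) -> (forall y, K y -> exists v, Vec m v /\ y = S v) ->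
  compact m K'.
Proof.
  intros HK Hc Hlip HK' Him I U HU Hcov.
  set (U' := fun (i : I) (y : vec) => exists v eps, Vec m v /\ 0 < eps /\
              (forall v', Vec m v' -> dist m v' v < eps -> U i v') /\ norm d (vsub y (S v)) < c * eps).
  destruct (HK I U') as [l Hl].
  - intros i y Hy [v [eps [Hv [He [Hb Hn]]]]]. exists (c * eps - norm d (vsub y (S v))). split. lra.
    intros w Hw Hd. exists v, eps. repeat split; auto. unfold dist in Hd.
    pose proof (norm_sub_triangle d w y (S v)). lra.
  - intros y Ky. destruct (Him y Ky) as [v [Hv ->]]. assert (K' v) by (apply HK'; auto).
    destruct (Hcov v H) as [i Hi]. destruct (HU i v Hv Hi) as [eps [He Hb]]. exists i, v, eps. repeat split; auto.
    replace (vsub (S v) (S v)) with vzero by (apply vec_ext; intro; unfold vsub, vzero; ring). rewrite norm_zero. nra.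
  - exists l. intros v Kv. apply HK' in Kv as Kv'. destruct Kv' as [Hv KSv]. destruct (Hl (S v) KSv) as [i [Hi [v0 [eps [Hv0 [He [Hb Hn]]]]]]].
    exists i. split; auto. apply Hb; auto. unfold dist. pose proof (Hlip v v0 Hv Hv0).
    apply (Rmult_lt_reg_l c); auto. lra.
Qed.

(** * Rotations about an axis *)

Lemma span1_self a : span1 a a.
Proof. exists 1. vext. ring. Qed.

Lemma unit_nonzero m a : norm m a = 1 -> a <> vzero.
Proof. intros Ha E. rewrite E, norm_zero in Ha. lra. Qed.

Definition radial (m : nat) (u v : vec) : vec := vsub v (scal (dot m v u) u).

Lemma radial_perp m u v : dot m u u = 1 -> dot m (radial m u v) u = 0.
Proof. intros H. unfold radial. autorewrite with dotE. rewrite H. ring. Qed.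

Lemma radial_sq m u v : dot m u u = 1 -> dot m (radial m u v) (radial m u v) = dot m v v - dot m v u * dot m v u.
Proof. intros H. unfold radial. autorewrite with dotE. rewrite (dot_comm m u v), H. ring. Qed.

Lemma radial_decomp m u v : v = vadd (scal (dot m v u) u) (radial m u v).
Proof. unfold radial. apply vec_ext; intro; unfold vadd, vsub, scal; ring. Qed.

Lemma Vec_radial m u v : Vec m u -> Vec m v -> Vec m (radial m u v).
Proof. intros; unfold radial; auto with vec. Qed.

Lemma unit_dot m u : norm m u = 1 -> dot m u u = 1.
Proof. intros H. rewrite <- norm_sq, H. ring. Qed.

Lemma abs_dot_unit_le m u v : norm m u = 1 -> Rabs (dot m v u) <= norm m v.
Proof. intros H. pose proof (cauchy_schwarz m v u). rewrite H in H0. lra. Qed.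

Lemma norm_radial_le m u v : norm m u = 1 -> norm m (radial m u v) <= norm m v.
Proof. intros H. apply norm_le_sq. apply norm_nonneg. rewrite radial_sq by (apply unit_dot; auto).
  rewrite <- norm_sq. nra. Qed.

Lemma norm_radial_eq m u v w : norm m u = 1 -> dot m w u = dot m v u -> norm m w = norm m v ->
  norm m (radial m u w) = norm m (radial m u v).
Proof. intros H1 H2 H3. unfold norm at 1 2. f_equal. rewrite !radial_sq by (apply unit_dot; auto).
  rewrite <- (norm_sq m w), <- (norm_sq m v), H3, H2. ring. Qed.

Lemma norm_le_dot_radial m u v : norm m u = 1 -> norm m v <= Rabs (dot m v u) + norm m (radial m u v).
Proof. intros H. apply norm_le_sq. pose proof (Rabs_pos (dot m v u)); pose proof (norm_nonneg m (radial m u v)); lra.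
  pose proof (norm_sq m (radial m u v)). rewrite radial_sq in H0 by (apply unit_dot; auto).
  assert (Rabs (dot m v u) * Rabs (dot m v u) = dot m v u * dot m v u) by (rewrite <- Rabs_mult; apply Rabs_right; apply Rle_ge; nra).
  pose proof (Rabs_pos (dot m v u)); pose proof (norm_nonneg m (radial m u v)). nra. Qed.

Lemma norm_pos_of_nonzero m v : Vec m v -> v <> vzero -> 0 < norm m v.
Proof. intros Hv Hn. pose proof (norm_nonneg m v). destruct (Req_dec (norm m v) 0); [|lra].
  exfalso; apply Hn; apply (norm_zero_inv m); auto. Qed.

Lemma norm_normalize m v : Vec m v -> v <> vzero -> norm m (scal (/ norm m v) v) = 1.
Proof. intros Hv Hn. pose proof (norm_pos_of_nonzero m v Hv Hn). rewrite norm_scal.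
  rewrite Rabs_right by (apply Rle_ge, Rlt_le, Rinv_0_lt_compat; auto). field. lra. Qed.

Lemma level_norm m u' y tau : dot m u' u' = 1 -> dot m y u' = tau ->
  dot m y y = tau * tau + dot m (vsub y (scal tau u')) (vsub y (scal tau u')).
Proof. intros H1 H2. autorewrite with dotE. rewrite (dot_comm m u' y), H1, H2. ring. Qed.

(* [rot m a b] is the rotation of the plane spanned by the unit vectors [a] and [b] taking [a] to [b],
   extended by the identity on the orthogonal complement; it is defined when [b <> -a]. *)
Definition rotf m (a b : vec) (z : vec) : R := dot m (vadd a b) z / (1 + dot m a b).

Definition rot m (a b z : vec) : vec :=
  vadd (vsub z (scal (rotf m a b z) (vadd a b))) (scal (2 * dot m a z) b).

Lemma Vec_rot m a b z : Vec m a -> Vec m b -> Vec m z -> Vec m (rot m a b z).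
Proof. intros; unfold rot; auto with vec. Qed.

Lemma rot_dot m a b z : dot m a a = 1 -> dot m b b = 1 -> 1 + dot m a b <> 0 ->
  dot m (rot m a b z) b = dot m z a.
Proof. intros Ha Hb Hab. unfold rot, rotf. autorewrite with dotE.
  rewrite Hb, ?(dot_comm m b a), ?(dot_comm m z a), ?(dot_comm m z b), ?(dot_comm m b z), ?(dot_comm m a z).
  field. auto. Qed.

Lemma rot_norm m a b z : dot m a a = 1 -> dot m b b = 1 -> 1 + dot m a b <> 0 ->
  norm m (rot m a b z) = norm m z.
Proof. intros Ha Hb Hab. unfold norm. f_equal. unfold rot, rotf. autorewrite with dotE.
  rewrite Ha, Hb, ?(dot_comm m b a), ?(dot_comm m z a), ?(dot_comm m z b), ?(dot_comm m b z), ?(dot_comm m a z).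
  field. auto. Qed.

Lemma rot_close m a b z : dot m a a = 1 -> dot m b b = 1 -> norm m (vsub b a) <= 1/2 ->
  norm m (vsub (rot m a b z) z) <= 8 * norm m z * norm m (vsub b a).
Proof.
  intros Ha Hb Hd. set (e := norm m (vsub b a)) in *. set (f := rotf m a b z).
  assert (Hna : norm m a = 1) by (apply norm_of_sq; lra).
  assert (He0 : 0 <= e) by apply norm_nonneg.
  assert (Hz0 : 0 <= norm m z) by apply norm_nonneg.
  assert (Hab : dot m a b = 1 + dot m a (vsub b a)) by (autorewrite with dotE; rewrite Ha; ring).
  assert (Hae : Rabs (dot m a (vsub b a)) <= e) by (pose proof (cauchy_schwarz m a (vsub b a)); rewrite Hna in H; unfold e; lra).
  assert (Hden : 3/2 <= 1 + dot m a b) by (rewrite Hab; pose proof (Rle_abs (- dot m a (vsub b a))) as Hq; rewrite Rabs_Ropp in Hq; lra).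
  assert (Haz : Rabs (dot m a z) <= norm m z) by (pose proof (cauchy_schwarz m a z); rewrite Hna in H; lra).
  assert (Hbz : Rabs (dot m (vsub b a) z) <= e * norm m z) by (apply cauchy_schwarz).
  assert (Hnb : norm m b = 1) by (apply norm_of_sq; lra).
  assert (Habz : Rabs (dot m (vadd a b) z) <= 2 * norm m z).
  { pose proof (cauchy_schwarz m (vadd a b) z). pose proof (norm_triangle m a b). rewrite Hna, Hnb in H0.
    pose proof (norm_nonneg m (vadd a b)). nra. }
  assert (Hf : Rabs f <= 4/3 * norm m z).
  { unfold f, rotf. unfold Rdiv. rewrite Rabs_mult, Rabs_inv, (Rabs_right (1 + dot m a b)) by lra.
    apply Rmult_le_reg_r with (1 + dot m a b). lra. rewrite Rmult_assoc, Rinv_l, Rmult_1_r by lra. nra. }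
  assert (Hf2 : Rabs (dot m a z - f) <= 4/3 * e * norm m z).
  { assert (E : dot m a z - f = (dot m a z * dot m a (vsub b a) - dot m (vsub b a) z) / (1 + dot m a b)).
    { unfold f, rotf. autorewrite with dotE. rewrite Ha. rewrite ?(dot_comm m z a), ?(dot_comm m z b). field. lra. }
    rewrite E. unfold Rdiv. rewrite Rabs_mult, Rabs_inv, (Rabs_right (1 + dot m a b)) by lra.
    apply Rmult_le_reg_r with (1 + dot m a b). lra. rewrite Rmult_assoc, Rinv_l, Rmult_1_r by lra.
    eapply Rle_trans. apply Rabs_triang. rewrite Rabs_Ropp, Rabs_mult.
    pose proof (Rabs_pos (dot m a z)). pose proof (Rabs_pos (dot m a (vsub b a))).
    assert (Rabs (dot m a z) * Rabs (dot m a (vsub b a)) <= norm m z * e).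
    { apply Rmult_le_compat; auto. }
    assert (0 <= e * norm m z * (1 + dot m a b - 3/2)) by (apply Rmult_le_pos; [apply Rmult_le_pos|]; lra).
    nra. }
  replace (vsub (rot m a b z) z) with (vadd (scal (2 * (dot m a z - f)) a) (scal (2 * dot m a z - f) (vsub b a)))
    by (unfold rot; fold f; apply vec_ext; intro; unfold vadd, vsub, scal; ring).
  eapply Rle_trans. apply norm_triangle. rewrite !norm_scal, Hna. fold e.
  rewrite Rabs_mult, (Rabs_right 2) by lra.
  assert (Rabs (2 * dot m a z - f) <= 2 * norm m z + 4/3 * norm m z).
  { eapply Rle_trans. apply Rabs_triang. rewrite Rabs_Ropp, Rabs_mult, (Rabs_right 2) by lra. lra. }
  nra.
Qed.

Lemma dot_close a b m : dot m a a = 1 -> norm m (vsub b a) <= 1/2 -> 3/2 <= 1 + dot m a b.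
Proof. intros Ha Hd. assert (Hna : norm m a = 1) by (apply norm_of_sq; lra).
  assert (dot m a b = 1 + dot m a (vsub b a)) by (autorewrite with dotE; rewrite Ha; ring).
  pose proof (cauchy_schwarz m a (vsub b a)). rewrite Hna in H0.
  pose proof (Rle_abs (- dot m a (vsub b a))). rewrite Rabs_Ropp in H1. lra. Qed.

Lemma rot_axis_converges m (ak : nat -> vec) al z :
  (forall k, dot m (ak k) (ak k) = 1) -> dot m al al = 1 -> null (fun k => norm m (vsub (ak k) al)) ->
  null (fun k => norm m (vsub (rot m al (ak k) z) z)).
Proof.
  intros Hak Hal Hconv. apply null_le with (a := fun k => 8 * norm m z * norm m (vsub (ak k) al)).
  - apply null_scal; auto.
  - destruct (Hconv (1/2) ltac:(lra)) as [N HN]. exists N. intros k Hk.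
    rewrite Rabs_right by (apply Rle_ge, norm_nonneg). apply rot_close; auto.
    specialize (HN k Hk). rewrite Rabs_right in HN by (apply Rle_ge, norm_nonneg). lra.
Qed.

Definition rot_invariant m (K : vec -> Prop) (a : vec) : Prop :=
  forall v w, K v -> Vec m w -> dot m w a = dot m v a -> norm m w = norm m v -> K w.

Section RotInvariantLevels.

Variables (m : nat) (K : vec -> Prop) (a : vec) (R : R).
Hypothesis HaV : Vec m a.
Hypothesis Ha1 : norm m a = 1.
Hypothesis HKV : forall v, K v -> Vec m v.
Hypothesis HKconv : convex K.
Hypothesis HKrot : rot_invariant m K a.
Hypothesis HKclosed : forall w, Vec m w ->
  (forall eps, 0 < eps -> exists w', K w' /\ norm m (vsub w' w) < eps) -> K w.
Hypothesis HKbd : forall v, K v -> norm m v <= R.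

Let Ha : dot m a a = 1 := unit_dot m a Ha1.

(* [w] is a convex combination of the two points of [K] at distance [|w1 - tau a|] from the axis
   on the line through [w] and the axis. *)
Lemma level_fill tau w w1 : Vec m w -> dot m w a = tau -> K w1 -> dot m w1 a = tau ->
  norm m (vsub w (scal tau a)) < norm m (vsub w1 (scal tau a)) -> K w.
Proof.
  intros Hw Hwu Kw1 Hw1u Hlt. set (c := scal tau a) in *.
  assert (Hcu : dot m c a = tau) by (unfold c; rewrite dot_scal_l, Ha; ring).
  set (r0 := norm m (vsub w1 c)) in *. set (dl := norm m (vsub w c)) in *.
  assert (Hdl : 0 <= dl) by apply norm_nonneg.
  assert (Hr0p : 0 < r0) by lra.
  set (e := if Req_EM_T dl 0 then scal (/ r0) (vsub w1 c) else scal (/ dl) (vsub w c)).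
  assert (He : Vec m e /\ dot m e a = 0 /\ norm m e = 1 /\ w = vadd c (scal dl e)).
  { unfold e. destruct (Req_EM_T dl 0) as [E0|E0].
    - assert (Ewc : w = c) by (apply (norm_sub_eq0 m); unfold c; auto with vec).
      repeat split; [unfold c; auto with vec| rewrite dot_scal_l, dot_sub_l, Hw1u, Hcu; ring| |].
      + rewrite norm_scal, Rabs_right by (apply Rle_ge, Rlt_le, Rinv_0_lt_compat; auto). fold r0. field; lra.
      + rewrite E0, Ewc. vext. ring.
    - assert (0 < dl) by lra.
      repeat split; [unfold c; auto with vec| rewrite dot_scal_l, dot_sub_l, Hwu, Hcu; ring| |].
      + rewrite norm_scal, Rabs_right by (apply Rle_ge, Rlt_le, Rinv_0_lt_compat; auto). fold dl. field; lra.
      + vext. field. lra. }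
  destruct He as [HeV [Hea [He1 Hwe]]].
  assert (Hed : dot m e e = 1) by (apply unit_dot; auto).
  assert (Hae : dot m a e = 0) by (rewrite dot_comm; auto).
  assert (Hnw1 : dot m w1 w1 = tau * tau + r0 * r0).
  { rewrite (level_norm m a w1 tau) by auto. fold c. unfold r0. rewrite norm_sq. auto. }
  assert (Hfar : forall sg, sg * sg = 1 -> K (vadd c (scal (sg * r0) e))).
  { intros sg Hsg. apply (HKrot w1); auto; [unfold c; auto with vec| |].
    - rewrite dot_add_l, !dot_scal_l, Hcu, Hea, Hw1u. ring.
    - unfold norm. f_equal. rewrite Hnw1. unfold c. autorewrite with dotE.
      rewrite Ha, Hed, Hae, Hea. nra. }
  replace w with (vadd (scal ((1 + dl / r0) / 2) (vadd c (scal (1 * r0) e)))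
                       (scal (1 - (1 + dl / r0) / 2) (vadd c (scal (-1 * r0) e)))).
  - apply HKconv; [apply Hfar; ring| apply Hfar; ring|].
    assert (0 <= dl / r0) by (apply Rle_mult_inv_pos; lra).
    assert (dl / r0 < 1) by (apply Rmult_lt_reg_r with r0; [lra| unfold Rdiv; rewrite Rmult_assoc, Rinv_l, Rmult_1_r; lra]).
    lra.
  - rewrite Hwe. vext. field. lra.
Qed.

Lemma level_ball tau w0 : K w0 -> dot m w0 a = tau ->
  exists r, 0 <= r /\ forall w, Vec m w -> dot m w a = tau ->
    (K w <-> norm m (vsub w (scal tau a)) <= r).
Proof.
  intros Kw0 Hw0. set (c := scal tau a).
  assert (HcV : Vec m c) by (unfold c; auto with vec).
  set (E := fun r => exists w, K w /\ dot m w a = tau /\ r = norm m (vsub w c)).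
  destruct (completeness E) as [r [Hub Hlub]].
  { exists (R + Rabs tau). intros r [w [Kw [_ ->]]]. eapply Rle_trans; [apply norm_add_sub|].
    unfold c. rewrite norm_scal, Ha1. specialize (HKbd w Kw). lra. }
  { exists (norm m (vsub w0 c)), w0. auto. }
  assert (Hw0r : norm m (vsub w0 c) <= r) by (apply Hub; exists w0; auto).
  assert (Hr0 : 0 <= r) by (pose proof (norm_nonneg m (vsub w0 c)); lra).
  assert (Hinside : forall w, Vec m w -> dot m w a = tau -> norm m (vsub w c) < r -> K w).
  { intros w Hw Hwa Hlt. destruct (classic (exists y, E y /\ norm m (vsub w c) < y)) as [[y [[w1 [Kw1 [Hw1 ->]]] Hy]]|Hny].
    - apply (level_fill tau w w1); auto.
    - exfalso. assert (r <= norm m (vsub w c)); [|lra].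
      apply Hlub. intros y Ey. apply Rnot_lt_le. intro. apply Hny. eauto. }
  exists r. split; auto. intros w Hw Hwa. split; [intros Kw; apply Hub; exists w; auto|]. intros Hd.
  destruct (Rle_lt_or_eq_dec _ _ Hd) as [Hlt|Heq]; [apply Hinside; auto|].
  destruct (Req_dec r 0) as [R0|R0].
  - replace w with w0; auto. transitivity c; [|symmetry]; apply (norm_sub_eq0 m); auto.
    + pose proof (norm_nonneg m (vsub w0 c)). lra.
    + lra.
  - apply HKclosed; auto. intros eps Heps.
    set (eta := Rmin (1/2) (eps / (2 * r))).
    assert (Heta : 0 < eta /\ eta <= 1/2 /\ eta <= eps / (2 * r)).
    { unfold eta. split; [apply Rmin_pos; [lra| apply Rdiv_lt_0_compat; lra]| split; [apply Rmin_l| apply Rmin_r]]. }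
    exists (vadd c (scal (1 - eta) (vsub w c))). split.
    + apply Hinside; auto with vec.
      * rewrite dot_add_l, dot_scal_l, dot_sub_l, Hwa. unfold c. rewrite dot_scal_l, Ha. ring.
      * replace (vsub (vadd c (scal (1 - eta) (vsub w c))) c) with (scal (1 - eta) (vsub w c)) by (vext; ring).
        rewrite norm_scal, Rabs_right, Heq by lra. nra.
    + replace (vsub (vadd c (scal (1 - eta) (vsub w c))) w) with (scal (- eta) (vsub w c)) by (vext; ring).
      rewrite norm_scal, Heq, Rabs_left by lra.
      assert (eta * r <= eps / 2); [|lra].
      replace (eps / 2) with (eps / (2 * r) * r) by (field; lra). apply Rmult_le_compat_r; lra.
Qed.

Lemma rot_invariant_rev_levels u t : span1 a u -> u <> vzero ->
  (forall w, ~ (K w /\ dot m w u = t)) \/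
  exists c r, span1 a c /\ dot m c u = t /\ 0 <= r /\
    forall w, Vec m w -> ((K w /\ dot m w u = t) <-> (dot m w u = t /\ dist m w c <= r)).
Proof.
  intros [sg ->] Hnz.
  assert (Hsg : sg <> 0) by (intros ->; apply Hnz; vext; ring).
  assert (Hlev : forall w, dot m w (scal sg a) = t <-> dot m w a = t / sg).
  { intros w. rewrite dot_scal_r. split; intros H; [rewrite <- H| rewrite H]; field; auto. }
  destruct (classic (exists w0, K w0 /\ dot m w0 (scal sg a) = t)) as [[w0 [Kw0 Hw0]]|Hno];
    [right| left; intros w Hw; apply Hno; eauto].
  apply Hlev in Hw0. destruct (level_ball (t / sg) w0 Kw0 Hw0) as [r [Hr Hball]].
  exists (scal (t / sg) a), r. split; [exists (t / sg); auto|]. split.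
  { rewrite dot_scal_l, dot_scal_r, Ha. field. auto. }
  split; auto. intros w Hw. rewrite Hlev. unfold dist.
  split; intros [H1 H2]; split; auto; apply (Hball w); auto.
Qed.

End RotInvariantLevels.

(** * Normalised charts of sections *)

(* A normalised parametrisation of the section [x^⊥ ∩ B] by [R^m]; the distortion bounds [c] and [C]
   are explicit because they have to be uniform along a sequence of sections. *)

Set Implicit Arguments.

Record RevChart (d : nat) (B : vec -> Prop) (x u : vec) (c C : R)
    (m : nat) (s : nat -> vec) (a : vec) : Prop := {
  chart_col_Vec : forall j, (j < m)%nat -> Vec d (s j);
  chart_axis_Vec : Vec m a;
  chart_axis_unit : norm m a = 1;
  chart_axis_image : lincomb s m a = u;
  chart_perp : forall v, Vec m v -> dot d (lincomb s m v) x = 0;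
  chart_onto : forall w, Vec d w -> dot d w x = 0 -> exists v, Vec m v /\ w = lincomb s m v;
  chart_upper : forall v, Vec m v -> norm d (lincomb s m v) <= C * norm m v;
  chart_lower : forall v, Vec m v -> c * norm m v <= norm d (lincomb s m v);
  chart_rot_invariant : forall v w, Vec m v -> Vec m w -> B (lincomb s m v) ->
    dot m w a = dot m v a -> norm m w = norm m v -> B (lincomb s m w)
}.
Unset Implicit Arguments.

Lemma line_unit_generator m L : IsLine m L ->
  exists a, Vec m a /\ norm m a = 1 /\ forall v, L v <-> span1 a v.
Proof.
  intros [u0 [Hu0 [Hnz HL]]]. pose proof (norm_pos_of_nonzero m u0 Hu0 Hnz).
  exists (scal (/ norm m u0) u0). split; [auto with vec| split; [apply norm_normalize; auto|]].
  intros v. rewrite HL. split; intros [t ->].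
  - exists (t * norm m u0). vext. field. lra.
  - exists (t / norm m u0). vext. field. lra.
Qed.

Lemma rev_body_radial_mono m K L a : SymBodyRevolution m K L -> Vec m a -> norm m a = 1 ->
  (forall v, L v <-> span1 a v) ->
  forall v w, Vec m w -> K v -> dot m w a = dot m v a ->
  norm m (radial m a w) <= norm m (radial m a v) -> K w.
Proof.
  intros [[HKV _] [_ Hrev]] HaV Ha1 HL v w Hw Kv Hwa Hrad.
  destruct (Hrev a (dot m v a)) as [Hno|[c [r [Lc [Hca [_ Hball]]]]]];
    [apply HL, span1_self| apply (unit_nonzero m), Ha1| exfalso; apply (Hno v); auto|].
  apply HL in Lc as [t ->]. rewrite dot_scal_l, unit_dot, Rmult_1_r in Hca by auto. subst t.
  apply (proj2 (Hball w Hw)). split; auto.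
  destruct (proj1 (Hball v (HKV v Kv)) (conj Kv eq_refl)) as [_ Hv].
  unfold dist in *. fold (radial m a v) in Hv. rewrite <- Hwa. fold (radial m a w). lra.
Qed.

Lemma rev_body_equator m K L a : SymBodyRevolution m K L -> Vec m a -> norm m a = 1 ->
  (forall v, L v <-> span1 a v) ->
  exists r, 0 < r /\ forall z, Vec m z -> dot m z a = 0 -> (K z <-> norm m z <= r).
Proof.
  intros [HK [_ Hrev]] HaV Ha1 HL.
  destruct (inner_ball m K HK) as [rho [Hrho Hin]].
  assert (K0 : K vzero) by (apply Hin; [apply Vec_zero| rewrite norm_zero; auto]).
  destruct (Hrev a 0) as [Hno|[c [r [Lc [Hca [Hr Hball]]]]]];
    [apply HL, span1_self| apply (unit_nonzero m), Ha1| exfalso; apply (Hno vzero); split; auto; apply dot_zero_l|].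
  apply HL in Lc as [t ->]. rewrite dot_scal_l, unit_dot, Rmult_1_r in Hca by auto. subst t.
  assert (Hball0 : forall z, Vec m z -> dot m z a = 0 -> (K z <-> norm m z <= r)).
  { intros z Hz Hza. specialize (Hball z Hz). unfold dist in Hball.
    replace (vsub z (scal 0 a)) with z in Hball by (vext; ring). tauto. }
  destruct (classic (exists z, Vec m z /\ dot m z a = 0 /\ z <> vzero)) as [[z [Hz [Hza Hnz]]]|Hnone].
  - exists r. split; auto.
    pose proof (norm_pos_of_nonzero m z Hz Hnz).
    set (z' := scal (rho / 2 / norm m z) z).
    assert (Hz' : norm m z' = rho / 2).
    { unfold z'. rewrite norm_scal, Rabs_right by (apply Rle_ge, Rlt_le, Rdiv_lt_0_compat; lra). field; lra. }
    assert (K z') by (apply Hin; [unfold z'; auto with vec| lra]).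
    apply Hball0 in H0; [lra| unfold z'; auto with vec| unfold z'; rewrite dot_scal_l, Hza; ring].
  - (* the equator is [{0}], so any radius describes it *)
    exists 1. split; [lra|]. intros z Hz Hza.
    assert (z = vzero) as -> by (apply NNPP; intro; apply Hnone; eauto).
    rewrite norm_zero. split; intros; auto; lra.
Qed.

Definition axis_stretch m (a : vec) (p q : R) (v : vec) : vec :=
  vadd (scal (p * dot m v a) a) (scal q (radial m a v)).

Lemma Vec_axis_stretch m a p q v : Vec m a -> Vec m v -> Vec m (axis_stretch m a p q v).
Proof. intros; unfold axis_stretch; auto using Vec_radial with vec. Qed.

Lemma axis_stretch_lin m a p q : LinOn m (axis_stretch m a p q).
Proof. intros s t v w _ _. unfold axis_stretch, radial. autorewrite with dotE. vext. ring. Qed.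

Lemma axis_stretch_dot m a p q v : dot m a a = 1 -> dot m (axis_stretch m a p q v) a = p * dot m v a.
Proof. intros Ha. unfold axis_stretch. rewrite dot_add_l, !dot_scal_l, radial_perp, Ha by auto. ring. Qed.

Lemma axis_stretch_radial m a p q v : dot m a a = 1 ->
  radial m a (axis_stretch m a p q v) = scal q (radial m a v).
Proof. intros Ha. unfold radial at 1. rewrite axis_stretch_dot by auto. unfold axis_stretch. vext. ring. Qed.

Lemma axis_stretch_inv m a p q v : dot m a a = 1 -> p <> 0 -> q <> 0 ->
  axis_stretch m a p q (axis_stretch m a (/ p) (/ q) v) = v.
Proof.
  intros Ha Hp Hq. unfold axis_stretch at 1. rewrite axis_stretch_dot, axis_stretch_radial by auto.
  unfold radial. vext. field. auto.
Qed.

Section StretchedChart.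

Variables (d m : nat) (B K : vec -> Prop) (x u a : vec) (T : vec -> vec) (al r : R).
Hypothesis HT : LinIsoOnto m d T (perp d x).
Hypothesis HBK : forall w, section d B x w <-> exists v, K v /\ w = T v.
Hypothesis HKV : forall v, K v -> Vec m v.
Hypothesis HaV : Vec m a.
Hypothesis Ha1 : norm m a = 1.
Hypothesis HTa : T a = scal al u.
Hypothesis Hal : al <> 0.
Hypothesis Hr : 0 < r.
Hypothesis Hlevel : forall v w, Vec m w -> K v -> dot m w a = dot m v a ->
  norm m (radial m a w) <= norm m (radial m a v) -> K w.
Hypothesis Hequator : forall z, Vec m z -> dot m z a = 0 -> (K z <-> norm m z <= r).

Let Ha : dot m a a = 1 := unit_dot m a Ha1.
Let TV : forall v, Vec m v -> Vec d (T v) := proj1 HT.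
Let TL : LinOn m T := proj1 (proj2 HT).
Let TI : forall v w, Vec m v -> Vec m w -> T v = T w -> v = w := proj1 (proj2 (proj2 HT)).
Let TIm : forall w, perp d x w <-> exists v, Vec m v /\ w = T v := proj2 (proj2 (proj2 HT)).

(* Rescaling the axis by [1 / al] and the radial part by [r] makes [S] send [a] to [u] and the unit
   equatorial disc onto the equator of [x^⊥ ∩ B]. *)
Let D := axis_stretch m a (/ al) r.
Let S v := T (D v).

Let VD v : Vec m v -> Vec m (D v).
Proof. apply Vec_axis_stretch; auto. Qed.

Lemma stretched_lin : LinOn m S.
Proof.
  intros s t v w Hv Hw. unfold S, D. rewrite (axis_stretch_lin m a (/ al) r s t v w Hv Hw).
  apply TL; auto.
Qed.

Lemma stretched_Vec v : Vec m v -> Vec d (S v).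
Proof. intros Hv. apply TV, VD, Hv. Qed.

Lemma stretched_axis : S a = u.
Proof.
  unfold S, D, axis_stretch. replace (vadd _ _) with (scal (/ al) a) by (unfold radial; rewrite Ha; vext; ring).
  rewrite (LinOn_scal m T), HTa by auto. vext. field. auto.
Qed.

Lemma stretched_perp v : Vec m v -> dot d (S v) x = 0.
Proof. intros Hv. apply TIm. exists (D v). auto. Qed.

Lemma stretched_onto w : Vec d w -> dot d w x = 0 -> exists v, Vec m v /\ w = S v.
Proof.
  intros Hw Hwx. destruct (proj1 (TIm w) (conj Hw Hwx)) as [v0 [Hv0 ->]].
  exists (axis_stretch m a (/ / al) (/ r) v0). split; [apply Vec_axis_stretch; auto|].
  unfold S, D. rewrite axis_stretch_inv; auto. apply Rinv_neq_0_compat. auto. lra.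
Qed.

Lemma stretched_section v : Vec m v -> (B (S v) <-> K (D v)).
Proof.
  intros Hv. split.
  - intros Bv. destruct (proj1 (HBK (S v)) (conj Bv (stretched_perp v Hv))) as [v0 [Kv0 E]].
    unfold S in E. apply TI in E; auto. rewrite E. auto.
  - intros Kv. apply HBK. exists (D v). auto.
Qed.

Lemma stretched_equator z : Vec m z -> dot m z a = 0 -> (B (S z) <-> norm m z <= 1).
Proof.
  intros Hz Hza. rewrite stretched_section by auto.
  replace (D z) with (scal r z) by (unfold D, axis_stretch, radial; rewrite Hza; vext; ring).
  rewrite Hequator by (auto with vec; rewrite dot_scal_l, Hza; ring).
  rewrite norm_scal, Rabs_right by lra. split; intros; nra.
Qed.

Lemma stretched_rot v w : Vec m v -> Vec m w -> B (S v) ->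
  dot m w a = dot m v a -> norm m w = norm m v -> B (S w).
Proof.
  intros Hv Hw Bv Hwa Hn. rewrite stretched_section in * by auto.
  apply (Hlevel (D v)); auto.
  - unfold D. rewrite !axis_stretch_dot, Hwa by auto. auto.
  - unfold D. rewrite !axis_stretch_radial, !norm_scal, (norm_radial_eq m a w v) by auto. lra.
Qed.

End StretchedChart.

(* If [|S v| < rho] then the axial part of [v] is at most [(rho + RB) / 2] and its radial part at most
   [(rho + (rho + RB) / 2) / rho]: see [small_image_norm_le]. *)
Definition small_image_radius (rho RB : R) : R := (rho + RB) / 2 + (rho + (rho + RB) / 2) / rho.

Definition chart_lower_const (rho RB : R) : R := rho / (small_image_radius rho RB + 1).

Lemma small_image_radius_pos rho RB : 0 < rho -> 0 < RB -> 0 < small_image_radius rho RB.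
Proof. intros. unfold small_image_radius. assert (0 < (rho + (rho + RB) / 2) / rho) by (apply Rdiv_lt_0_compat; lra). lra. Qed.

Lemma chart_lower_const_pos rho RB : 0 < rho -> 0 < RB -> 0 < chart_lower_const rho RB.
Proof. intros. unfold chart_lower_const. pose proof (small_image_radius_pos rho RB H H0). apply Rdiv_lt_0_compat; lra. Qed.

Section ChartBounds.

Variables (d m : nat) (B : vec -> Prop) (S : vec -> vec) (a u : vec) (rho RB : R).
Hypothesis HS : LinOn m S.
Hypothesis HSV : forall v, Vec m v -> Vec d (S v).
Hypothesis HaV : Vec m a.
Hypothesis Ha1 : norm m a = 1.
Hypothesis HSa : S a = u.
Hypothesis Hu1 : norm d u = 1.
Hypothesis Hrho : 0 < rho.
Hypothesis HRB : 0 < RB.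
Hypothesis Hin : forall z, Vec d z -> norm d z < rho -> B z.
Hypothesis Hbd : forall z, B z -> norm d z <= RB.
Hypothesis Hequator : forall z, Vec m z -> dot m z a = 0 -> (B (S z) <-> norm m z <= 1).
Hypothesis Hrot : forall v w, Vec m v -> Vec m w -> B (S v) ->
  dot m w a = dot m v a -> norm m w = norm m v -> B (S w).

Let Ha : dot m a a = 1 := unit_dot m a Ha1.

Lemma equator_upper z : Vec m z -> dot m z a = 0 -> norm d (S z) <= RB * norm m z.
Proof.
  intros Hz Hza. destruct (classic (z = vzero)) as [->|Hnz].
  - rewrite (LinOn_zero m S HS), !norm_zero. lra.
  - pose proof (norm_pos_of_nonzero m z Hz Hnz) as Hzpos.
    assert (Bz1 : B (S (scal (/ norm m z) z))).
    { apply Hequator; auto with vec. rewrite dot_scal_l, Hza; ring. rewrite norm_normalize; auto; lra. }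
    apply Hbd in Bz1. rewrite (LinOn_scal m S), norm_scal, Rabs_right in Bz1
      by (auto; apply Rle_ge, Rlt_le, Rinv_0_lt_compat; auto).
    apply (Rmult_le_reg_l (/ norm m z)); [apply Rinv_0_lt_compat; auto|].
    replace (/ norm m z * (RB * norm m z)) with RB by (field; lra). lra.
Qed.

Lemma equator_lower z : Vec m z -> dot m z a = 0 -> rho * norm m z <= norm d (S z).
Proof.
  intros Hz Hza. destruct (Rle_lt_dec (rho * norm m z) (norm d (S z))) as [|Hlt]; auto. exfalso.
  pose proof (norm_nonneg d (S z)).
  set (q := norm d (S z) / rho).
  assert (Hq0 : 0 <= q) by (apply Rle_mult_inv_pos; lra).
  assert (Hqz : q < norm m z) by (apply (Rmult_lt_reg_r rho); [lra| unfold q; field_simplify; lra]).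
  (* rescale z so that it leaves the unit equatorial disc while its image stays in the inner ball *)
  set (be := 2 / (norm m z + q)).
  assert (Hbe : 0 < be) by (apply Rdiv_lt_0_compat; lra).
  assert (Hout : 1 < be * norm m z).
  { apply (Rmult_lt_reg_r (norm m z + q)); [lra|]. unfold be. field_simplify; lra. }
  assert (Hins : be * norm d (S z) < rho).
  { replace (norm d (S z)) with (q * rho) by (unfold q; field; lra).
    apply (Rmult_lt_reg_r (norm m z + q)); [lra|]. unfold be. field_simplify; nra. }
  assert (B (S (scal be z))) by (apply Hin; rewrite ?(LinOn_scal m S), ?norm_scal, ?Rabs_right by (auto; lra); auto with vec).
  apply Hequator in H0; [| auto with vec| rewrite dot_scal_l, Hza; ring].
  rewrite norm_scal, Rabs_right in H0 by lra. lra.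
Qed.

Lemma chart_upper_bound v : Vec m v -> norm d (S v) <= (1 + RB) * norm m v.
Proof.
  intros Hv. rewrite (radial_decomp m a v) at 1.
  rewrite (LinOn_add m S), (LinOn_scal m S), HSa by (auto using Vec_radial with vec).
  eapply Rle_trans; [apply norm_triangle|]. rewrite norm_scal, Hu1.
  pose proof (equator_upper (radial m a v) (Vec_radial m a v HaV Hv) (radial_perp m a v Ha)).
  pose proof (abs_dot_unit_le m a v Ha1). pose proof (norm_radial_le m a v Ha1).
  pose proof (norm_nonneg m v). nra.
Qed.

Lemma small_image_norm_le v : Vec m v -> norm d (S v) < rho -> norm m v <= small_image_radius rho RB.
Proof.
  intros Hv Hsmall. assert (Bv : B (S v)) by auto.
  set (t := dot m v a). set (z := radial m a v).
  assert (Hz : Vec m z) by (apply Vec_radial; auto).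
  assert (Hza : dot m z a = 0) by (apply radial_perp; auto).
  (* the reflection of v in the axis lies on the same level sphere *)
  set (vr := vsub (scal t a) z).
  assert (Bvr : B (S vr)).
  { apply (Hrot v vr); auto; [unfold vr; auto with vec| |].
    - unfold vr. rewrite dot_sub_l, dot_scal_l, Ha, Hza. unfold t. ring.
    - unfold norm. f_equal. unfold vr. autorewrite with dotE.
      rewrite (dot_comm m a z), Hza, Ha. unfold z. rewrite radial_sq by auto. fold t. ring. }
  assert (Ht : Rabs t <= (rho + RB) / 2).
  { assert (E : vadd (S v) (S vr) = scal (2 * t) u).
    { unfold vr. rewrite <- (LinOn_add m S), <- HSa, <- (LinOn_scal m S) by auto with vec. f_equal.
      unfold z, radial. fold t. vext. ring. }
    assert (norm d (scal (2 * t) u) <= rho + RB).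
    { rewrite <- E. eapply Rle_trans; [apply norm_triangle|]. pose proof (Hbd _ Bvr). lra. }
    rewrite norm_scal, Hu1, Rabs_mult, (Rabs_right 2) in H by lra. lra. }
  assert (Hzb : norm m z <= (rho + Rabs t) / rho).
  { apply (Rmult_le_reg_l rho); [lra|]. replace (rho * ((rho + Rabs t) / rho)) with (rho + Rabs t) by (field; lra).
    eapply Rle_trans; [apply equator_lower; auto|].
    replace (S z) with (vsub (S v) (scal t u))
      by (rewrite <- HSa, <- (LinOn_scal m S), <- (LinOn_sub m S) by auto with vec; f_equal).
    eapply Rle_trans; [apply norm_add_sub|]. rewrite norm_scal, Hu1. lra. }
  pose proof (norm_le_dot_radial m a v Ha1). fold t z in H.
  assert ((rho + Rabs t) / rho <= (rho + (rho + RB) / 2) / rho)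
    by (apply Rmult_le_compat_r; [apply Rlt_le, Rinv_0_lt_compat|]; lra).
  unfold small_image_radius. lra.
Qed.

Lemma chart_lower_bound v : Vec m v -> chart_lower_const rho RB * norm m v <= norm d (S v).
Proof.
  intros Hv. destruct (Rle_lt_dec (chart_lower_const rho RB * norm m v) (norm d (S v))) as [|Hlt]; auto.
  exfalso. pose proof (norm_nonneg d (S v)). pose proof (small_image_radius_pos rho RB Hrho HRB).
  set (M := small_image_radius rho RB) in *.
  assert (Hvpos : 0 < norm m v).
  { destruct (Req_dec (norm m v) 0) as [E|E]; [rewrite E in Hlt; lra| pose proof (norm_nonneg m v); lra]. }
  assert (Hk : 0 < (M + 1) / norm m v) by (apply Rdiv_lt_0_compat; lra).
  assert (Hbig : norm m (scal ((M + 1) / norm m v) v) = M + 1)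
    by (rewrite norm_scal, Rabs_right by lra; field; lra).
  assert (norm m (scal ((M + 1) / norm m v) v) <= M); [|lra].
  apply small_image_norm_le; auto with vec.
  rewrite (LinOn_scal m S), norm_scal, Rabs_right by (auto; lra).
  unfold chart_lower_const in Hlt. fold M in Hlt.
  apply (Rmult_lt_compat_l ((M + 1) / norm m v)) in Hlt; auto.
  replace ((M + 1) / norm m v * (rho / (M + 1) * norm m v)) with rho in Hlt by (field; lra). lra.
Qed.

End ChartBounds.

Lemma rev_chart_exists d B x L u rho RB :
  SymConvexBody d B -> 0 < rho -> 0 < RB -> (forall z, Vec d z -> norm d z < rho -> B z) ->
  (forall z, B z -> norm d z <= RB) -> OnSphere d u -> (forall v, L v <-> span1 u v) ->
  AffSymBodyRevolution d (perp d x) (section d B x) L ->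
  exists m s a, RevChart d B x u (chart_lower_const rho RB) (1 + RB) m s a.
Proof.
  intros HB Hrho HRB Hin Hbd [HuV Hu1] HLu [m [T [K [L' [HT [HK [HBK HLL']]]]]]].
  pose proof HK as [[HKV _] [HL' _]].
  destruct (line_unit_generator m L' HL') as [a [HaV [Ha1 HL'a]]].
  destruct (rev_body_equator m K L' a HK HaV Ha1 HL'a) as [r [Hr Hequator]].
  pose proof (rev_body_radial_mono m K L' a HK HaV Ha1 HL'a) as Hlevel.
  pose proof HT as [TV [TL [TI _]]].
  destruct (proj1 (HLu (T a))) as [al HTa].
  { apply HLL'. exists a. split; auto. apply HL'a, span1_self. }
  assert (Hal : al <> 0).
  { intros ->. apply (unit_nonzero m a Ha1), TI; auto with vec.
    rewrite HTa, (LinOn_zero m T TL). vext. ring. }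
  set (S := fun v => T (axis_stretch m a (/ al) r v)).
  pose proof (stretched_lin d m x a T al r HT) as HSL.
  pose proof (stretched_Vec d m x a T al r HT HaV) as HSV.
  assert (HS : forall v, Vec m v -> lincomb (fun j => S (basis j)) m v = S v)
    by (intros; symmetry; apply lin_expand; auto).
  assert (HSa : S a = u) by (apply (stretched_axis d m x u a T al); auto).
  assert (Hequator' : forall z, Vec m z -> dot m z a = 0 -> (B (S z) <-> norm m z <= 1))
    by (intros; apply (stretched_equator d m B K x a T al r); auto).
  assert (Hrot : forall v w, Vec m v -> Vec m w -> B (S v) ->
            dot m w a = dot m v a -> norm m w = norm m v -> B (S w))
    by (intros; apply (stretched_rot d m B K x a T al r HT HBK HKV HaV Ha1 Hlevel) with v; auto).
  exists m, (fun j => S (basis j)), a. split; intros; rewrite ?HS by auto; auto.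
  - apply HSV, Vec_basis; auto.
  - apply (stretched_perp d m x a T al r HT); auto.
  - destruct (stretched_onto d m x a T al r HT HaV Ha1 Hal Hr w) as [v Hv]; auto.
    exists v. rewrite HS; tauto.
  - apply (chart_upper_bound d m B S a u RB); auto.
  - apply (chart_lower_bound d m B S a u rho RB); auto.
  - apply Hrot with v; rewrite <- ?HS; auto.
Qed.

(** * The body of revolution carried by a chart *)

Section ChartBody.

Variables (d m : nat) (B : vec -> Prop) (x u a : vec) (c C : R) (s : nat -> vec).
Hypothesis HB : SymConvexBody d B.
Hypothesis Hc : 0 < c.
Hypothesis HC : 0 < C.
Hypothesis Hchart : RevChart d B x u c C m s a.

Let K v := Vec m v /\ section d B x (lincomb s m v).

Let Hs : forall j, (j < m)%nat -> Vec d (s j) := chart_col_Vec Hchart.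

Lemma chart_dist_lower v w : Vec m v -> Vec m w ->
  c * norm m (vsub v w) <= norm d (vsub (lincomb s m v) (lincomb s m w)).
Proof. intros Hv Hw. rewrite <- lincomb_sub. apply (chart_lower Hchart). auto with vec. Qed.

Lemma chart_injective v w : Vec m v -> Vec m w -> lincomb s m v = lincomb s m w -> v = w.
Proof.
  intros Hv Hw E. pose proof (chart_dist_lower v w Hv Hw) as H. rewrite E in H.
  replace (vsub (lincomb s m w) (lincomb s m w)) with vzero in H by (vext; ring).
  rewrite norm_zero in H. pose proof (norm_nonneg m (vsub v w)).
  apply (norm_sub_eq0 m); auto. nra.
Qed.

Lemma chart_body_convex : convex K.
Proof.
  intros v w t [Hv [Bv Hvx]] [Hw [Bw Hwx]] Ht. split; [auto with vec|].
  rewrite lincomb_lin. split; [apply HB; auto|]. autorewrite with dotE. rewrite Hvx, Hwx. ring.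
Qed.

Lemma chart_body_symmetric : symmetric K.
Proof.
  intros v [Hv [Bv Hvx]]. split; [auto with vec|]. rewrite lincomb_opp.
  split; [apply HB; auto|]. rewrite dot_opp_l, Hvx. ring.
Qed.

Lemma chart_body_compact : compact m K.
Proof.
  pose proof HB as [_ [HBc _]].
  apply (compact_pullback d m (section d B x) (lincomb s m) c); auto.
  - apply compact_section; auto.
  - apply chart_dist_lower.
  - intros v. unfold K. tauto.
  - intros y [By Hyx]. apply (chart_onto Hchart); auto. apply HB; auto.
Qed.

Lemma chart_body_interior : nonempty_interior m K.
Proof.
  destruct (inner_ball d B HB) as [rho [Hrho Hin]].
  exists vzero, (rho / C). split; [apply Vec_zero| split; [apply Rdiv_lt_0_compat; lra|]].
  intros w Hw Hd. unfold dist in Hd. replace (vsub w vzero) with w in Hd by (vext; ring).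
  split; auto. split; [|apply (chart_perp Hchart); auto]. apply Hin; [apply Vec_lincomb; auto|].
  eapply Rle_lt_trans; [apply (chart_upper Hchart); auto|].
  apply (Rmult_lt_reg_l (/ C)); [apply Rinv_0_lt_compat; lra|].
  rewrite <- Rmult_assoc, Rinv_l, Rmult_1_l by lra. rewrite Rmult_comm. auto.
Qed.

Lemma chart_body_closed w : Vec m w ->
  (forall eps, 0 < eps -> exists w', K w' /\ norm m (vsub w' w) < eps) -> K w.
Proof.
  pose proof HB as [HBV [HBc _]].
  intros Hw Happ. split; auto. split; [|apply (chart_perp Hchart); auto].
  apply (compact_closed d B); auto; [apply Vec_lincomb; auto|]. intros eps Heps.
  destruct (Happ (eps / C)) as [w' [[Hw' [Bw' _]] Hd]]; [apply Rdiv_lt_0_compat; lra|].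
  exists (lincomb s m w'). split; auto. rewrite <- lincomb_sub.
  eapply Rle_lt_trans; [apply (chart_upper Hchart); auto with vec|].
  apply (Rmult_lt_reg_l (/ C)); [apply Rinv_0_lt_compat; lra|].
  rewrite <- Rmult_assoc, Rinv_l, Rmult_1_l by lra. rewrite Rmult_comm. auto.
Qed.

Lemma chart_body_bounded : exists R, forall v, K v -> norm m v <= R.
Proof.
  pose proof HB as [_ [HBc _]]. destruct (compact_bounded d B HBc) as [RB [_ Hbd]].
  exists (RB / c). intros v [Hv [Bv _]].
  apply Rmult_le_reg_l with c; auto. replace (c * (RB / c)) with RB by (field; lra).
  pose proof (chart_lower Hchart Hv). pose proof (Hbd _ Bv). lra.
Qed.

Lemma chart_body_rot_invariant : rot_invariant m K a.
Proof.
  intros v w [Hv [Bv _]] Hw Hd Hn. split; auto. split.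
  - apply (chart_rot_invariant Hchart Hv Hw Bv); auto.
  - apply (chart_perp Hchart); auto.
Qed.

Lemma chart_body_rev : SymBodyRevolution m K (span1 a).
Proof.
  pose proof (chart_axis_Vec Hchart) as HaV. pose proof (chart_axis_unit Hchart) as Ha1.
  destruct chart_body_bounded as [R HR].
  split; [|split].
  - split; [intros v [Hv _]; auto|].
    split; [apply chart_body_compact| split; [apply chart_body_convex|]].
    split; [apply chart_body_interior| apply chart_body_symmetric].
  - exists a. split; [auto| split; [apply (unit_nonzero m a Ha1)| tauto]].
  - intros u' t Hu' Hnz. apply (rot_invariant_rev_levels m K a R); auto.
    + intros v [Hv _]. auto.
    + apply chart_body_convex.
    + apply chart_body_rot_invariant.
    + apply chart_body_closed.
Qed.

Lemma aff_rev_of_rev_chart L : (forall v, L v <-> span1 u v) ->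
  AffSymBodyRevolution d (perp d x) (section d B x) L.
Proof.
  intros HL. pose proof HB as [HBV _].
  exists m, (lincomb s m), K, (span1 a). split; [|split; [apply chart_body_rev| split]].
  - split; [intros; apply Vec_lincomb; auto| split; [intros; apply lincomb_lin| split; [apply chart_injective|]]].
    intros w. split.
    + intros [Hw Hwx]. apply (chart_onto Hchart); auto.
    + intros [v [Hv ->]]. split; [apply Vec_lincomb; auto| apply (chart_perp Hchart); auto].
  - intros w. split.
    + intros [Bw Hwx]. destruct (chart_onto Hchart (HBV w Bw) Hwx) as [v [Hv ->]].
      exists v. split; auto. split; auto. split; auto.
    + intros [v [[_ Hs'] ->]]. auto.
  - intros w. rewrite HL. rewrite <- (chart_axis_image Hchart). split.
    + intros [t ->]. exists (scal t a). split; [exists t; auto| rewrite lincomb_scal; auto].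
    + intros [v [[t ->] ->]]. exists t. rewrite lincomb_scal. auto.
Qed.

End ChartBody.

Lemma rev_chart_dim_le d B x u c C m s a : 0 < c -> RevChart d B x u c C m s a -> (m <= d)%nat.
Proof.
  intros Hc Hch. apply (dim_le m d (lincomb s m)); [apply lincomb_LinOn| |].
  - intros v _. apply Vec_lincomb, (chart_col_Vec Hch).
  - apply (chart_injective d m B x u a c C s Hc Hch).
Qed.

(** * Limits of charts *)

Lemma rev_charts_convergent_subseq d B c C (xs us : nat -> vec) (mf : nat -> nat)
    (sf : nat -> nat -> vec) (af : nat -> vec) :
  0 < c -> (forall k, RevChart d B (xs k) (us k) c C (mf k) (sf k) (af k)) ->
  exists phi m sl al, incr phi /\ Vec m al /\ (forall j, (j < m)%nat -> Vec d (sl j)) /\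
    (forall k, RevChart d B (xs (phi k)) (us (phi k)) c C m (sf (phi k)) (af (phi k))) /\
    (forall j, (j < m)%nat -> ConvergesTo d (fun k => sf (phi k) j) (sl j)) /\
    ConvergesTo m (fun k => af (phi k)) al.
Proof.
  intros Hc Hch.
  destruct (bounded_nat_const_subseq mf d) as [phi1 [m [Hphi1 Hm]]].
  { intros k. apply (rev_chart_dim_le d B (xs k) (us k) c C (mf k) (sf k) (af k) Hc (Hch k)). }
  assert (Hch1 : forall k, RevChart d B (xs (phi1 k)) (us (phi1 k)) c C m (sf (phi1 k)) (af (phi1 k)))
    by (intros k; rewrite <- (Hm k); auto).
  destruct (bounded_cols_subseq d m (fun k => sf (phi1 k)) C) as [phi2 [sl [Hphi2 Hsl]]].
  { intros k j Hj. rewrite <- (lincomb_basis _ m j Hj), <- (Rmult_1_r C), <- (norm_basis m j Hj).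
    apply (chart_upper (Hch1 k)), Vec_basis; auto. }
  destruct (bounded_vec_subseq m (fun k => af (phi1 (phi2 k))) 1) as [phi3 [al [Hphi3 [Hal Halc]]]].
  { intros k. rewrite (chart_axis_unit (Hch1 (phi2 k))). lra. }
  exists (fun k => phi1 (phi2 (phi3 k))), m, sl, al.
  split; [apply incr_comp; [|apply incr_comp]; auto|]. split; [auto|].
  split; [intros j Hj; apply Hsl, Hj|]. split; [auto|]. split.
  - intros j Hj. apply (ConvergesTo_subseq d (fun k => sf (phi1 (phi2 k)) j) (sl j) phi3); auto.
    apply conv_null, Hsl, Hj.
  - apply conv_null, Halc.
Qed.

Section ChartLimit.

Variables (d m : nat) (B : vec -> Prop) (c C : R) (x u al : vec) (xk uk ak : nat -> vec)
  (sk : nat -> nat -> vec) (sl : nat -> vec).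
Hypothesis HB : SymConvexBody d B.
Hypothesis Hc : 0 < c.
Hypothesis Hx1 : norm d x = 1.
Hypothesis HuV : Vec d u.
Hypothesis Hxk : forall k, OnSphere d (xk k).
Hypothesis Hcharts : forall k, RevChart d B (xk k) (uk k) c C m (sk k) (ak k).
Hypothesis Hsl : forall j, (j < m)%nat -> Vec d (sl j).
Hypothesis HalV : Vec m al.
Hypothesis Hsconv : forall j, (j < m)%nat -> ConvergesTo d (fun k => sk k j) (sl j).
Hypothesis Haconv : ConvergesTo m ak al.
Hypothesis Hxconv : ConvergesTo d xk x.
Hypothesis Huconv : ConvergesTo d uk u.

Let sconv j : (j < m)%nat -> null (fun k => norm d (vsub (sk k j) (sl j))).
Proof. intros Hj. apply conv_null, Hsconv, Hj. Qed.

Let aconv : null (fun k => norm m (vsub (ak k) al)).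
Proof. apply conv_null, Haconv. Qed.

Let xconv : null (fun k => norm d (vsub (xk k) x)).
Proof. apply conv_null, Hxconv. Qed.

Let Hupk k v : Vec m v -> norm d (lincomb (sk k) m v) <= C * norm m v.
Proof. apply (chart_upper (Hcharts k)). Qed.

Let Hnorm_conv v : null (fun k => norm d (lincomb (sk k) m v) - norm d (lincomb sl m v)).
Proof.
  apply null_le with (a := fun k => norm d (vsub (lincomb (sk k) m v) (lincomb sl m v))).
  - apply lincomb_conv_cols; auto.
  - exists O; intros k _. apply norm_diff_le.
Qed.

Lemma limit_upper v : Vec m v -> norm d (lincomb sl m v) <= C * norm m v.
Proof. intros Hv. apply (null_lim_ge _ _ (Hnorm_conv v)). exists O; intros; auto. Qed.

Lemma limit_lower v : Vec m v -> c * norm m v <= norm d (lincomb sl m v).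
Proof. intros Hv. apply (null_lim_le _ _ (Hnorm_conv v)). exists O; intros; apply (chart_lower (Hcharts k)); auto. Qed.

Lemma limit_perp v : Vec m v -> dot d (lincomb sl m v) x = 0.
Proof.
  intros Hv. apply null_zero_const. apply null_le with
    (a := fun k => norm d (vsub (lincomb sl m v) (lincomb (sk k) m v)) + C * norm m v * norm d (vsub (xk k) x)).
  - apply null_plus; [|apply null_scal; auto].
    apply null_le with (a := fun k => norm d (vsub (lincomb (sk k) m v) (lincomb sl m v))); [apply lincomb_conv_cols; auto|].
    exists O; intros k _. rewrite norm_sub_sym, Rabs_right by (apply Rle_ge, norm_nonneg). lra.
  - exists O; intros k _.
    replace (dot d (lincomb sl m v) x)
      with (dot d (vsub (lincomb sl m v) (lincomb (sk k) m v)) x + dot d (lincomb (sk k) m v) (vsub x (xk k)))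
      by (autorewrite with dotE; rewrite (chart_perp (Hcharts k) Hv); ring).
    eapply Rle_trans; [apply Rabs_triang|].
    pose proof (cauchy_schwarz d (vsub (lincomb sl m v) (lincomb (sk k) m v)) x).
    pose proof (cauchy_schwarz d (lincomb (sk k) m v) (vsub x (xk k))).
    rewrite Hx1 in H. rewrite norm_sub_sym in H0. pose proof (Hupk k v Hv).
    pose proof (norm_nonneg d (vsub (xk k) x)). nra.
Qed.

Lemma limit_axis_unit : norm m al = 1.
Proof.
  assert (null (fun _ => 1 - norm m al)); [|apply null_zero_const in H; lra].
  apply null_le with (a := fun k => norm m (vsub (ak k) al)); auto. exists O; intros k _.
  rewrite <- (chart_axis_unit (Hcharts k)). apply norm_diff_le.
Qed.

Lemma limit_axis_image : lincomb sl m al = u.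
Proof.
  apply (null_limit_unique d uk); [apply Vec_lincomb; auto| auto| |apply conv_null, Huconv].
  apply null_le with (a := fun k => norm d (vsub (lincomb (sk k) m (ak k)) (lincomb sl m al))).
  - apply (lincomb_conv_cols_args d m sk sl C ak al); auto. intros k. apply (chart_axis_Vec (Hcharts k)).
  - exists O; intros k _. rewrite (chart_axis_image (Hcharts k)), Rabs_right by (apply Rle_ge, norm_nonneg). lra.
Qed.

Lemma limit_onto w : Vec d w -> dot d w x = 0 -> exists v, Vec m v /\ w = lincomb sl m v.
Proof.
  intros Hw Hwx.
  set (wk := fun k => vsub w (scal (dot d w (xk k)) (xk k))).
  assert (Hwk : forall k, Vec d (wk k) /\ dot d (wk k) (xk k) = 0).
  { intros k. destruct (Hxk k) as [HV H1]. split; unfold wk; auto with vec.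
    autorewrite with dotE. rewrite (unit_dot d (xk k) H1). ring. }
  destruct (functional_choice (fun k v => Vec m v /\ wk k = lincomb (sk k) m v)) as [vk Hvk].
  { intros k. apply (chart_onto (Hcharts k)); apply Hwk. }
  assert (Hwkw : forall k, norm d (vsub (wk k) w) <= norm d w * norm d (vsub (xk k) x)).
  { intros k. destruct (Hxk k) as [_ Hn]. unfold wk.
    replace (vsub (vsub w (scal (dot d w (xk k)) (xk k))) w) with (scal (- dot d w (xk k)) (xk k)) by (vext; ring).
    rewrite norm_scal, Hn, Rmult_1_r, Rabs_Ropp.
    replace (dot d w (xk k)) with (dot d w (xk k) - dot d w x) by (rewrite Hwx; ring).
    rewrite <- dot_sub_r. apply cauchy_schwarz. }
  destruct (bounded_vec_subseq m vk (2 * norm d w / c)) as [phi [v [Hphi [Hv Hnull]]]].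
  { intros k. destruct (Hvk k) as [HV E].
    pose proof (chart_lower (Hcharts k) HV). rewrite <- E in H.
    assert (norm d (wk k) <= 2 * norm d w).
    { unfold wk. eapply Rle_trans; [apply norm_add_sub|]. rewrite norm_scal. destruct (Hxk k) as [_ H1]. rewrite H1.
      pose proof (cauchy_schwarz d w (xk k)). rewrite H1 in H0. lra. }
    apply Rmult_le_reg_l with c; auto. replace (c * (2 * norm d w / c)) with (2 * norm d w) by (field; lra). lra. }
  exists v. split; auto. symmetry.
  apply (null_limit_unique d (fun k => wk (phi k))); [apply Vec_lincomb; auto| auto| |].
  - apply null_le with (a := fun k => norm d (vsub (lincomb (sk (phi k)) m (vk (phi k))) (lincomb sl m v))).
    + apply (lincomb_conv_cols_args d m (fun k => sk (phi k)) sl C (fun k => vk (phi k)) v); auto.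
      * intros j Hj. apply (null_subseq (fun k => norm d (vsub (sk k j) (sl j)))); [apply incr_ge|]; auto.
      * intros; apply Hvk.
    + exists O; intros k _. destruct (Hvk (phi k)) as [_ <-]. rewrite Rabs_right by (apply Rle_ge, norm_nonneg). lra.
  - apply null_le with (a := fun k => norm d w * norm d (vsub (xk (phi k)) x)).
    + apply null_scal, (null_subseq (fun k => norm d (vsub (xk k) x))); [apply incr_ge|]; auto.
    + exists O; intros k _. rewrite Rabs_right by (apply Rle_ge, norm_nonneg). apply Hwkw.
Qed.
Let rot_image_conv z : Vec m z ->
  null (fun k => norm d (vsub (lincomb (sk k) m (rot m al (ak k) z)) (lincomb sl m z))).
Proof.
  intros Hz. apply (lincomb_conv_cols_args d m sk sl C (fun k => rot m al (ak k) z)); auto.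
  - intros k. apply Vec_rot; auto. apply (chart_axis_Vec (Hcharts k)).
  - apply rot_axis_converges; auto.
    + intros k. apply unit_dot, (chart_axis_unit (Hcharts k)).
    + apply unit_dot, limit_axis_unit.
Qed.

(* The shrunk point [lam v] is well inside [B], so its images under the charts (after rotating [al]
   onto [ak k]) eventually lie in [B]; the rotation invariance of the charts then transfers this to
   [lam w]. *)
Lemma rot_image_mem_eventually v w lam : Vec m v -> Vec m w -> B (lincomb sl m v) ->
  dot m w al = dot m v al -> norm m w = norm m v -> 0 <= lam < 1 ->
  exists N, forall k, (N <= k)%nat -> B (lincomb (sk k) m (rot m al (ak k) (scal lam w))).
Proof.
  intros Hv Hw Bv Hd Hn Hlam. destruct (inner_ball d B HB) as [rho [Hrho Hin]].
  assert (Hal1 : dot m al al = 1) by (apply unit_dot, limit_axis_unit).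
  destruct (rot_image_conv (scal lam v) ltac:(auto with vec) ((1 - lam) * rho)) as [N1 HN1]; [nra|].
  destruct (aconv (1/2)) as [N2 HN2]; [lra|].
  exists (max N1 N2). intros k Hk.
  specialize (HN1 k ltac:(lia)). specialize (HN2 k ltac:(lia)).
  rewrite Rabs_right in HN1, HN2 by (apply Rle_ge, norm_nonneg).
  pose proof (chart_axis_Vec (Hcharts k)) as HakV.
  pose proof (unit_dot m _ (chart_axis_unit (Hcharts k))) as Hak1.
  assert (Hden : 3/2 <= 1 + dot m al (ak k)) by (apply dot_close; auto; lra).
  assert (Brv : B (lincomb (sk k) m (rot m al (ak k) (scal lam v)))).
  { apply (convex_shrink_mem d B rho (lincomb sl m v) lam); auto.
    - apply Vec_lincomb. intros j Hj. apply (chart_col_Vec (Hcharts k) Hj).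
    - rewrite <- lincomb_scal. auto. }
  apply (chart_rot_invariant (Hcharts k) (v := rot m al (ak k) (scal lam v))); auto.
  - apply Vec_rot; auto with vec.
  - apply Vec_rot; auto with vec.
  - rewrite !rot_dot by (auto; lra). rewrite !dot_scal_l, Hd. auto.
  - rewrite !rot_norm by (auto; lra). rewrite !norm_scal, Hn. auto.
Qed.

Lemma limit_rot_invariant v w : Vec m v -> Vec m w -> B (lincomb sl m v) ->
  dot m w al = dot m v al -> norm m w = norm m v -> B (lincomb sl m w).
Proof.
  intros Hv Hw Bv Hd Hn. pose proof HB as [HBV [HBc _]].
  apply (compact_closed d B); auto; [apply Vec_lincomb; auto|]. intros eps Heps.
  pose proof (norm_nonneg d (lincomb sl m w)) as HNS. set (NS := norm d (lincomb sl m w)) in *.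
  set (dl := Rmin (1/2) (eps / (2 * (NS + 1)))).
  assert (Hdl : 0 < dl /\ dl <= 1/2 /\ dl <= eps / (2 * (NS + 1))).
  { split; [apply Rmin_pos; [lra| apply Rdiv_lt_0_compat; lra]| split; [apply Rmin_l| apply Rmin_r]]. }
  assert (HdlNS : dl * NS < eps / 2).
  { apply Rle_lt_trans with (eps / (2 * (NS + 1)) * NS); [apply Rmult_le_compat_r; lra|].
    apply (Rmult_lt_reg_r (2 * (NS + 1))); [lra|]. field_simplify; nra. }
  destruct (rot_image_mem_eventually v w (1 - dl)) as [N1 HN1]; auto; [lra|].
  destruct (rot_image_conv (scal (1 - dl) w) ltac:(auto with vec) (eps / 2)) as [N2 HN2]; [lra|].
  specialize (HN1 (max N1 N2) ltac:(lia)). specialize (HN2 (max N1 N2) ltac:(lia)).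
  rewrite Rabs_right in HN2 by (apply Rle_ge, norm_nonneg).
  eexists. split; [exact HN1|].
  eapply Rle_lt_trans; [apply norm_sub_triangle|].
  rewrite lincomb_scal in *.
  replace (vsub (scal (1 - dl) (lincomb sl m w)) (lincomb sl m w)) with (scal (- dl) (lincomb sl m w))
    by (vext; ring).
  rewrite norm_scal, Rabs_Ropp, Rabs_right by lra. fold NS. lra.
Qed.

Lemma rev_chart_limit : RevChart d B x u c C m sl al.
Proof.
  split; [exact Hsl| exact HalV| exact limit_axis_unit| exact limit_axis_image| exact limit_perp|
    exact limit_onto| exact limit_upper| exact limit_lower| exact limit_rot_invariant].
Qed.

End ChartLimit.

Theorem mainTheorem13 (n : nat) (B : vec -> Prop) (xs : nat -> vec) (x : vec)
  (Ls : nat -> vec -> Prop) (L : vec -> Prop) :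
  SymConvexBody (S n) B ->
  (forall i, OnSphere (S n) (xs i)) -> OnSphere (S n) x ->
  ConvergesTo (S n) xs x ->
  (forall i, IsLine (S n) (Ls i)) -> IsLine (S n) L ->
  RPConverges (S n) Ls L ->
  (forall i, AffSymBodyRevolution (S n) (perp (S n) (xs i))
               (section (S n) B (xs i)) (Ls i)) ->
  AffSymBodyRevolution (S n) (perp (S n) x) (section (S n) B x) L.
Proof.
  intros HB Hxs Hx Hxconv _ _ [us [u [Hus [Hu [HLu Husconv]]]]] Haff.
  pose proof HB as [_ [HBc _]].
  destruct (inner_ball (S n) B HB) as [rho [Hrho Hin]].
  destruct (compact_bounded (S n) B HBc) as [RB [HRB Hbd]].
  set (c := chart_lower_const rho RB).
  assert (Hc : 0 < c) by (apply chart_lower_const_pos; auto).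
  destruct (functional_choice (fun i (chart : nat * (nat -> vec) * vec) =>
      RevChart (S n) B (xs i) (us i) c (1 + RB) (fst (fst chart)) (snd (fst chart)) (snd chart)))
    as [f Hf].
  { intros i. destruct (rev_chart_exists (S n) B (xs i) (Ls i) (us i) rho RB) as [m [s [a Hch]]];
      try apply Hus; auto.
    exists (m, s, a). exact Hch. }
  destruct (rev_charts_convergent_subseq (S n) B c (1 + RB) xs us (fun i => fst (fst (f i)))
              (fun i => snd (fst (f i))) (fun i => snd (f i)) Hc Hf)
    as [phi [m [sl [al [Hphi [Hal [Hsl [Hch [Hsconv Haconv]]]]]]]]].
  apply (aff_rev_of_rev_chart (S n) m B x u al c (1 + RB) sl HB Hc); [lra| |exact HLu].
  apply (rev_chart_limit (S n) m B c (1 + RB) x u al (fun k => xs (phi k)) (fun k => us (phi k))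
           (fun k => snd (f (phi k))) (fun k => snd (fst (f (phi k)))) sl HB Hc);
    try apply Hx; try apply Hu; auto.
  - apply (ConvergesTo_subseq _ xs); auto.
  - apply (ConvergesTo_subseq _ us); auto.
Qed.
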